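(* Let $h=h(u,v)$ be a smooth function with $h_{uu}h_{vv}\neq 0$ and consider the quasilinear system $$u_t=h_{uv}u_x+h_{vv}v_x,\qquad v_t=h_{uu}u_x+h_{uv}v_x .\tag{S}$$ (1) Let $u=u(x,t)$, $v=v(x,t)$ be a solution of (S) which is nondegenerate on a neighbourhood of a point $(x_0,t_0)$, i.e. $h_{uu}u_x^2-h_{vv}v_x^2\neq 0$ there, and put $u_0=u(x_0,t_0)$, $v_0=v(x_0,t_0)$. Then there exists a function $f=f(u,v)$ defined on a neighbourhood of $(u_0,v_0)$ and satisfying the linear PDE $$h_{uu}f_{vv}=h_{vv}f_{uu}$$ such that, on a sufficiently small neighbourhood of $(x_0,t_0)$, the identities $$x+t\,h_{uv}(u(x,t),v(x,t))=f_{uv}(u(x,t),v(x,t)),\qquad t\,h_{vv}(u(x,t),v(x,t))=f_{vv}(u(x,t),v(x,t))$$ hold. (2) Conversely, let $f=f(u,v)$ be any solution of $h_{uu}f_{vv}=h_{vv}f_{uu}$ defined on a neighbourhood of a point $(u_0,v_0)$, and let $(x_0,t_0)$ satisfy $x_0+t_0h_{uv}(u_0,v_0)=f_{uv}(u_0,v_0)$ and $t_0h_{vv}(u_0,v_0)=f_{vv}(u_0,v_0)$. Assume that $$\det\begin{pmatrix} t_0h_{uuv}-f_{uuv} & t_0h_{uvv}-f_{uvv}\\ t_0h_{uvv}-f_{uvv} & t_0h_{vvv}-f_{vvv}\end{pmatrix}\neq 0,$$ all derivatives evaluated at $(u_0,v_0)$. Then the functions $u=u(x,t)$, $v=v(x,t)$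 locally defined near $(x_0,t_0)$ (with $u(x_0,t_0)=u_0$, $v(x_0,t_0)=v_0$) by the implicit equations $$x+t\,h_{uv}(u,v)=f_{uv}(u,v),\qquad t\,h_{vv}(u,v)=f_{vv}(u,v)$$ satisfy the system (S).
   Context: Subscripts denote partial derivatives, e.g. $h_{uv}=\partial^2h/\partial u\partial v$. *)

From Stdlib Require Import Reals List.
From Coquelicot Require Import Coquelicot.
Open Scope R_scope.

Definition pu (f : R -> R -> R) : R -> R -> R :=
  fun u v => Derive (fun a => f a v) u.
Definition pv (f : R -> R -> R) : R -> R -> R :=
  fun u v => Derive (fun b => f u b) v.

(* Iterated partial derivative along a word of directions
   (false = first variable, true = second variable). *)
Fixpoint dw (l : list bool) (f : R -> R -> R) : R -> R -> R :=
  match l with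
  | nil => f
  | b :: l' => (if b then pv else pu) (dw l' f)
  end.

Definition smooth_on (D : R -> R -> Prop) (f : R -> R -> R) : Prop :=
  forall (l : list bool) (a b : R), D a b ->
    ex_derive (fun s => dw l f s b) a /\
    ex_derive (fun s => dw l f a s) b /\
    continuity_2d_pt (dw l f) a b.

Definition sq (a b r : R) : R -> R -> Prop :=
  fun x y => Rabs (x - a) < r /\ Rabs (y - b) < r.

Definition open2 (D : R -> R -> Prop) : Prop :=
  forall a b, D a b -> exists e, 0 < e /\ (forall x y, sq a b e x y -> D x y).

Definition solves_S (h u v : R -> R -> R) (x t : R) : Prop :=
  ex_derive (fun y => u y t) x /\ ex_derive (fun s => u x s) t /\
  ex_derive (fun y => v y t) x /\ ex_derive (fun s => v x s) t /\
  Derive (fun s => u x s) t =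
    pv (pu h) (u x t) (v x t) * Derive (fun y => u y t) x
    + pv (pv h) (u x t) (v x t) * Derive (fun y => v y t) x /\
  Derive (fun s => v x s) t =
    pu (pu h) (u x t) (v x t) * Derive (fun y => u y t) x
    + pv (pu h) (u x t) (v x t) * Derive (fun y => v y t) x.

Definition nondeg (h u v : R -> R -> R) (x t : R) : Prop :=
  pu (pu h) (u x t) (v x t) * (Derive (fun y => u y t) x) ^ 2
  - pv (pv h) (u x t) (v x t) * (Derive (fun y => v y t) x) ^ 2 <> 0.

Definition lin_pde (h f : R -> R -> R) (a b : R) : Prop :=
  pu (pu h) a b * pv (pv f) a b = pv (pv h) a b * pu (pu f) a b.

Definition hodo (h f : R -> R -> R) (x t a b : R) : Prop :=
  x + t * pv (pu h) a b = pv (pu f) a b /\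
  t * pv (pv h) a b = pv (pv f) a b.

From Stdlib Require Import Reals Lra Psatz List ClassicalEpsilon.
From Coquelicot Require Import Coquelicot.
Open Scope R_scope.

(* (1) By (S), the Jacobian [u_x v_t - u_t v_x] equals [h_uu u_x^2 - h_vv v_x^2 <> 0], so
   [(u, v)] has a smooth local inverse [(X, T)]. Differentiating the inverse and using (S)
   shows that the forms [T h_uu du + (X + T h_uv) dv] and [(X + T h_uv) du + T h_vv dv]
   are closed; three applications of the Poincare lemma give [f] with
   [f_uu = T h_uu], [f_uv = X + T h_uv], [f_vv = T h_vv], which is the linear PDE
   together with the implicit equations.
   (2) The implicit equations say that [(x, t)] is the image of [(u, v)] under the
   hodograph map [(f_uv - T h_uv, T)], [T = f_vv / h_vv], whose Jacobian is the given
   determinant divided by [h_vv]. The inverse function theorem for [C^1] maps of the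
   plane (obtained from the mean value and intermediate value theorems) thus provides
   [(u, v)], and the derivatives of the inverse map satisfy (S) by the linear PDE. *)

Lemma sq_locally_2d (a b r x y : R) : sq a b r x y -> locally_2d (sq a b r) x y.
Proof.
  intros [Hx Hy].
  assert (Hp : 0 < Rmin (r - Rabs (x - a)) (r - Rabs (y - b))) by (apply Rmin_glb_lt; lra).
  exists (mkposreal _ Hp); intros u v Hu Hv; simpl in *.
  assert (Hm1 := Rmin_l (r - Rabs (x - a)) (r - Rabs (y - b))).
  assert (Hm2 := Rmin_r (r - Rabs (x - a)) (r - Rabs (y - b))).
  split.
  - replace (u - a) with ((u - x) + (x - a)) by ring.
    eapply Rle_lt_trans; [apply Rabs_triang|]; lra.
  - replace (v - b) with ((v - y) + (y - b)) by ring.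
    eapply Rle_lt_trans; [apply Rabs_triang|]; lra.
Qed.

Lemma locally_2d_sq (P : R -> R -> Prop) (x y : R) :
  locally_2d P x y -> exists e, 0 < e /\ forall u v, sq x y e u v -> P u v.
Proof.
  intros [d Hd]. exists d; split; [apply cond_pos|].
  intros u v [Hu Hv]; apply Hd; assumption.
Qed.

Lemma open2_locally_2d (D : R -> R -> Prop) (x y : R) : open2 D -> D x y -> locally_2d D x y.
Proof.
  intros HD Hxy. destruct (HD x y Hxy) as [e [He H]].
  exists (mkposreal e He); intros u v Hu Hv; apply H; split; assumption.
Qed.

Lemma open2_sq (a b r : R) : open2 (sq a b r).
Proof. intros x y H. exact (locally_2d_sq _ _ _ (sq_locally_2d a b r x y H)). Qed.

Lemma sq_center (a b r : R) : 0 < r -> sq a b r a b.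
Proof. intros; unfold sq; rewrite !Rminus_diag, Rabs_R0; lra. Qed.

Lemma sq_le (a b r r' x y : R) : r <= r' -> sq a b r x y -> sq a b r' x y.
Proof. unfold sq; intros; lra. Qed.

Lemma Rabs_sub_between (a b c : R) : Rmin a b <= c <= Rmax a b -> Rabs (c - a) <= Rabs (b - a).
Proof.
  intros H. unfold Rmin, Rmax in H. destruct (Rle_dec a b).
  - rewrite (Rabs_right (c - a)), (Rabs_right (b - a)); lra.
  - rewrite (Rabs_left1 (c - a)), (Rabs_left1 (b - a)); lra.
Qed.

Lemma Rabs_between_lt (a a' z c r : R) : Rmin a a' <= z <= Rmax a a' ->
  Rabs (a - c) < r -> Rabs (a' - c) < r -> Rabs (z - c) < r.
Proof.
  intros Hz H1 H2. apply Rabs_def2 in H1; apply Rabs_def2 in H2.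
  assert (c - r < Rmin a a') by (apply Rmin_glb_lt; lra).
  assert (Rmax a a' < c + r) by (apply Rmax_lub_lt; lra).
  apply Rabs_def1; lra.
Qed.

Lemma sq_hsegment (c1 c2 r a b s : R) :
  sq c1 c2 r a b -> Rmin c1 a <= s <= Rmax c1 a -> sq c1 c2 r s b.
Proof.
  intros [Ha Hb] Hs. split; [|exact Hb].
  apply (Rabs_between_lt c1 a s c1 r Hs); [|exact Ha].
  rewrite Rminus_diag, Rabs_R0. assert (H0 := Rabs_pos (a - c1)). lra.
Qed.

Lemma sq_vsegment (c1 c2 r a b s : R) :
  sq c1 c2 r a b -> Rmin c2 b <= s <= Rmax c2 b -> sq c1 c2 r c1 s.
Proof.
  intros [Ha Hb] Hs. split.
  - rewrite Rminus_diag, Rabs_R0. assert (H0 := Rabs_pos (a - c1)). lra.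
  - apply (Rabs_between_lt c2 b s c2 r Hs); [|exact Hb].
    rewrite Rminus_diag, Rabs_R0. assert (H0 := Rabs_pos (b - c2)). lra.
Qed.

Lemma continuity_2d_pt_comp (g p q : R -> R -> R) (x y : R) :
  continuity_2d_pt g (p x y) (q x y) -> continuity_2d_pt p x y ->
  continuity_2d_pt q x y -> continuity_2d_pt (fun a b => g (p a b) (q a b)) x y.
Proof.
  intros Hg Hp Hq eps.
  destruct (Hg eps) as [d Hd].
  destruct (Hp d) as [d1 Hd1]. destruct (Hq d) as [d2 Hd2].
  assert (H0 : 0 < Rmin d1 d2) by (apply Rmin_glb_lt; apply cond_pos).
  exists (mkposreal _ H0); intros u v Hu Hv; simpl in *.
  assert (M1 := Rmin_l d1 d2); assert (M2 := Rmin_r d1 d2).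
  apply Hd; [apply Hd1|apply Hd2]; lra.
Qed.

Lemma continuity_2d_pt_swap (f : R -> R -> R) (x y : R) :
  continuity_2d_pt f x y -> continuity_2d_pt (fun a b => f b a) y x.
Proof. intros H eps. destruct (H eps) as [d Hd]. exists d; intros u v Hu Hv; auto. Qed.

Lemma continuity_2d_pt_continuous_l (f : R -> R -> R) (x y : R) :
  continuity_2d_pt f x y -> continuous (fun s => f s y) x.
Proof.
  intros H. apply continuity_pt_filterlim.
  intros eps Heps. destruct (H (mkposreal _ Heps)) as [d Hd].
  exists d; split; [apply cond_pos|]. intros z [_ Hz]. simpl in *. unfold R_dist in *.
  apply Hd; [exact Hz|rewrite Rminus_diag, Rabs_R0; apply cond_pos].
Qed.

Lemma continuity_2d_pt_continuous_r (f : R -> R -> R) (x y : R) :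
  continuity_2d_pt f x y -> continuous (fun s => f x s) y.
Proof.
  intros H. apply (continuity_2d_pt_continuous_l (fun a b => f b a)).
  apply continuity_2d_pt_swap, H.
Qed.

Lemma ex_derive_continuity_pt (g : R -> R) (x : R) : ex_derive g x -> continuity_pt g x.
Proof. intros H. apply continuity_pt_filterlim, (ex_derive_continuous g x), H. Qed.

Lemma ex_derive_derivable_pt_lim (g : R -> R) (x : R) :
  ex_derive g x -> derivable_pt_lim g x (Derive g x).
Proof. intros; apply is_derive_Reals, Derive_correct; assumption. Qed.

Lemma is_derive_of_difference_quotient (f : R -> R) (x l : R) :
  (forall eps, 0 < eps -> exists eta, 0 < eta /\ forall h, h <> 0 -> Rabs h < eta ->
     Rabs ((f (x + h) - f x) / h - l) < eps) -> is_derive f x l.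
Proof.
  intros H. apply is_derive_Reals. intros eps Heps.
  destruct (H eps Heps) as [eta [He Hh]]. exists (mkposreal eta He). exact Hh.
Qed.

Lemma MVT_Derive (g : R -> R) (a b : R) :
  (forall z, Rmin a b <= z <= Rmax a b -> ex_derive g z) ->
  exists c, Rmin a b <= c <= Rmax a b /\ g b - g a = Derive g c * (b - a).
Proof.
  intros H. apply (MVT_gen g a b (Derive g)).
  - intros x Hx. apply Derive_correct, H; lra.
  - intros x Hx. apply ex_derive_continuity_pt, H; lra.
Qed.

Definition partials (D : R -> R -> Prop) (f : R -> R -> R) :=
  forall a b, D a b -> ex_derive (fun s => f s b) a /\ ex_derive (fun s => f a s) b.

Lemma increment_sq (F : R -> R -> R) (c1 c2 r a b a' b' : R) :
  partials (sq c1 c2 r) F -> sq c1 c2 r a b -> sq c1 c2 r a' b' ->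
  exists xi eta, Rmin a a' <= xi <= Rmax a a' /\ Rmin b b' <= eta <= Rmax b b' /\
    F a' b' - F a b = pu F xi b' * (a' - a) + pv F a eta * (b' - b).
Proof.
  intros HF [Ha1 Ha2] [Ha1' Ha2'].
  destruct (MVT_Derive (fun s => F s b') a a') as [xi [Hxi Exi]].
  { intros z Hz. refine (proj1 (HF z b' _)).
    split; [exact (Rabs_between_lt a a' z c1 r Hz Ha1 Ha1')|assumption]. }
  destruct (MVT_Derive (fun s => F a s) b b') as [eta [Heta Eeta]].
  { intros z Hz. refine (proj2 (HF a z _)).
    split; [assumption|exact (Rabs_between_lt b b' z c2 r Hz Ha2 Ha2')]. }
  exists xi, eta; split; [|split]; try assumption.
  unfold pu, pv. cbv beta in Exi, Eeta. rewrite <- Exi, <- Eeta. ring.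
Qed.

Lemma differentiable_pt_lim_partials (f : R -> R -> R) (x y : R) :
  locally_2d (fun u v => ex_derive (fun z => f z v) u) x y ->
  continuity_2d_pt (pu f) x y -> ex_derive (fun z => f x z) y ->
  differentiable_pt_lim f x y (pu f x y) (pv f x y).
Proof.
  intros [d0 Hd0] Hc Hv eps.
  assert (He2 : 0 < eps / 2) by (destruct eps; simpl; lra).
  destruct (Hc (mkposreal _ He2)) as [d1 Hd1].
  destruct (ex_derive_derivable_pt_lim _ _ Hv (eps/2) He2) as [d2 Hd2].
  assert (Hm : 0 < Rmin d0 (Rmin d1 d2)) by (repeat apply Rmin_glb_lt; apply cond_pos).
  exists (mkposreal _ Hm); intros u v Hu Hv'; simpl in Hu, Hv'.
  assert (m1 := Rmin_l d0 (Rmin d1 d2)); assert (m2 := Rmin_r d0 (Rmin d1 d2)).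
  assert (m3 := Rmin_l d1 d2); assert (m4 := Rmin_r d1 d2).
  destruct (MVT_Derive (fun s => f s v) x u) as [xi [Hxi Exi]].
  { intros z Hz. apply Hd0; [|lra].
    apply Rle_lt_trans with (Rabs (u - x)); [apply Rabs_sub_between|]; lra. }
  assert (Hxi1 : Rabs (xi - x) <= Rabs (u - x)) by (apply Rabs_sub_between; assumption).
  assert (B1 : Rabs (pu f xi v - pu f x y) < eps / 2) by (apply Hd1; lra).
  assert (B2 : Rabs (f x v - f x y - pv f x y * (v - y)) <= eps / 2 * Rabs (v - y)).
  { destruct (Req_dec (v - y) 0) as [E|E].
    - replace v with y by lra.
      replace (f x y - f x y - pv f x y * (y - y)) with 0 by ring.
      rewrite Rminus_diag, Rabs_R0. lra.
    - assert (Hq := Hd2 (v - y) E ltac:(lra)). replace (y + (v - y)) with v in Hq by ring.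
      replace (f x v - f x y - pv f x y * (v - y)) with
        (((f x v - f x y) / (v - y) - pv f x y) * (v - y)) by (field; exact E).
      rewrite Rabs_mult. apply Rmult_le_compat_r; [apply Rabs_pos|apply Rlt_le, Hq]. }
  assert (Eu : f u v = f x v + pu f xi v * (u - x)) by (unfold pu; cbv beta in Exi; lra).
  replace (f u v - f x y - (pu f x y * (u - x) + pv f x y * (v - y))) with
    ((pu f xi v - pu f x y) * (u - x) + (f x v - f x y - pv f x y * (v - y)))
    by (rewrite Eu; ring).
  eapply Rle_trans; [apply Rabs_triang|]. rewrite Rabs_mult.
  assert (Hm1 := Rmax_l (Rabs (u - x)) (Rabs (v - y))).
  assert (Hm2 := Rmax_r (Rabs (u - x)) (Rabs (v - y))).
  assert (Hp := Rabs_pos (u - x)). simpl.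
  assert (Rabs (pu f xi v - pu f x y) * Rabs (u - x) <= eps / 2 * Rabs (u - x))
    by (apply Rmult_le_compat_r; lra).
  assert (eps / 2 * Rabs (u - x) <= eps / 2 * Rmax (Rabs (u - x)) (Rabs (v - y)))
    by (apply Rmult_le_compat_l; lra).
  assert (eps / 2 * Rabs (v - y) <= eps / 2 * Rmax (Rabs (u - x)) (Rabs (v - y)))
    by (apply Rmult_le_compat_l; lra).
  lra.
Qed.

(** * Graded smoothness *)

Definition Cn (n : nat) (D : R -> R -> Prop) (f : R -> R -> R) :=
  forall a b, D a b -> ex_diff_n f n a b.

Section GradedSmoothness.

Variable D : R -> R -> Prop.
Hypothesis D_open : open2 D.

Lemma Cn_0 (f : R -> R -> R) :
  Cn 0 D f <-> forall a b, D a b -> continuity_2d_pt f a b.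
Proof.
  split; intros H a b Hab.
  - exact (proj1 (H a b Hab)).
  - split; [exact (H a b Hab)|exact I].
Qed.

Lemma Cn_le (m n : nat) (f : R -> R -> R) : (m <= n)%nat -> Cn n D f -> Cn m D f.
Proof. intros Hmn H a b Hab. eapply ex_diff_n_m; eauto. Qed.

Lemma Cn_continuity (n : nat) (f : R -> R -> R) :
  Cn n D f -> forall a b, D a b -> continuity_2d_pt f a b.
Proof. intros H a b Hab. destruct n; exact (proj1 (H a b Hab)). Qed.

Lemma Cn_partials (n : nat) (f : R -> R -> R) : Cn (S n) D f -> partials D f.
Proof. intros H a b Hab. destruct (H a b Hab) as [_ [H1 [H2 _]]]. auto. Qed.

Lemma Cn_pu (n : nat) (f : R -> R -> R) : Cn (S n) D f -> Cn n D (pu f).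
Proof. intros H a b Hab. exact (proj1 (proj2 (proj2 (proj2 (H a b Hab))))). Qed.

Lemma Cn_pv (n : nat) (f : R -> R -> R) : Cn (S n) D f -> Cn n D (pv f).
Proof. intros H a b Hab. exact (proj2 (proj2 (proj2 (proj2 (H a b Hab))))). Qed.

Lemma Cn_ext (n : nat) (f g : R -> R -> R) :
  (forall a b, D a b -> f a b = g a b) -> Cn n D f -> Cn n D g.
Proof.
  intros E H a b Hab. apply ex_diff_n_ext_loc with f; [|apply H, Hab].
  destruct (open2_locally_2d D a b D_open Hab) as [d Hd].
  exists d; intros u v Hu Hv. apply E, Hd; assumption.
Qed.

Lemma partials_differentiable (f : R -> R -> R) : partials D f ->
  (forall a b, D a b -> continuity_2d_pt (pu f) a b) ->
  forall a b, D a b -> differentiable_pt_lim f a b (pu f a b) (pv f a b).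
Proof.
  intros Hp Hc a b Hab. apply differentiable_pt_lim_partials.
  - destruct (open2_locally_2d D a b D_open Hab) as [d Hd].
    exists d; intros u v Hu Hv. exact (proj1 (Hp u v (Hd u v Hu Hv))).
  - apply Hc, Hab.
  - exact (proj2 (Hp a b Hab)).
Qed.

Lemma Cn_S (n : nat) (f : R -> R -> R) :
  partials D f -> Cn n D (pu f) -> Cn n D (pv f) -> Cn (S n) D f.
Proof.
  intros Hp Hu Hv a b Hab. repeat split.
  - apply differentiable_continuity_pt. exists (pu f a b), (pv f a b).
    apply (partials_differentiable f Hp (Cn_continuity n _ Hu) a b Hab).
  - exact (proj1 (Hp a b Hab)).
  - exact (proj2 (Hp a b Hab)).
  - exact (Hu a b Hab).
  - exact (Hv a b Hab).
Qed.

Lemma Cn_const (n : nat) (c : R) : Cn n D (fun _ _ => c).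
Proof.
  revert c; induction n as [|n IHn]; intros c.
  - apply Cn_0; intros; apply continuity_2d_pt_const.
  - apply Cn_S.
    + intros a b _; split; apply ex_derive_const.
    + apply Cn_ext with (fun _ _ => 0); [|apply IHn].
      intros a b _; unfold pu; rewrite Derive_const; reflexivity.
    + apply Cn_ext with (fun _ _ => 0); [|apply IHn].
      intros a b _; unfold pv; rewrite Derive_const; reflexivity.
Qed.

Lemma Cn_plus (n : nat) (f g : R -> R -> R) :
  Cn n D f -> Cn n D g -> Cn n D (fun a b => f a b + g a b).
Proof.
  revert f g; induction n as [|n IHn]; intros f g Hf Hg.
  - apply Cn_0; intros a b Hab; apply continuity_2d_pt_plus;
      [apply (Cn_continuity _ _ Hf)|apply (Cn_continuity _ _ Hg)]; auto.
  - assert (Pf := Cn_partials _ _ Hf); assert (Pg := Cn_partials _ _ Hg).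
    apply Cn_S.
    + intros a b Hab; destruct (Pf a b Hab), (Pg a b Hab); split;
        [apply (ex_derive_plus (fun s => f s b) (fun s => g s b))
        |apply (ex_derive_plus (fun s => f a s) (fun s => g a s))]; assumption.
    + apply Cn_ext with (fun a b => pu f a b + pu g a b).
      * intros a b Hab; destruct (Pf a b Hab), (Pg a b Hab); unfold pu.
        rewrite Derive_plus; auto.
      * apply IHn; apply Cn_pu; auto.
    + apply Cn_ext with (fun a b => pv f a b + pv g a b).
      * intros a b Hab; destruct (Pf a b Hab), (Pg a b Hab); unfold pv.
        rewrite Derive_plus; auto.
      * apply IHn; apply Cn_pv; auto.
Qed.

Lemma Cn_mult (n : nat) (f g : R -> R -> R) :
  Cn n D f -> Cn n D g -> Cn n D (fun a b => f a b * g a b).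
Proof.
  revert f g; induction n as [|n IHn]; intros f g Hf Hg.
  - apply Cn_0; intros a b Hab; apply continuity_2d_pt_mult;
      [apply (Cn_continuity _ _ Hf)|apply (Cn_continuity _ _ Hg)]; auto.
  - assert (Pf := Cn_partials _ _ Hf); assert (Pg := Cn_partials _ _ Hg).
    assert (Hf' := Cn_le n (S n) f (le_S _ _ (le_n n)) Hf).
    assert (Hg' := Cn_le n (S n) g (le_S _ _ (le_n n)) Hg).
    apply Cn_S.
    + intros a b Hab; destruct (Pf a b Hab), (Pg a b Hab); split;
        apply ex_derive_mult; assumption.
    + apply Cn_ext with (fun a b => pu f a b * g a b + f a b * pu g a b).
      * intros a b Hab; destruct (Pf a b Hab), (Pg a b Hab); unfold pu.
        rewrite Derive_mult; auto.
      * apply Cn_plus; apply IHn; auto; apply Cn_pu; auto.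
    + apply Cn_ext with (fun a b => pv f a b * g a b + f a b * pv g a b).
      * intros a b Hab; destruct (Pf a b Hab), (Pg a b Hab); unfold pv.
        rewrite Derive_mult; auto.
      * apply Cn_plus; apply IHn; auto; apply Cn_pv; auto.
Qed.

Lemma Cn_opp (n : nat) (f : R -> R -> R) : Cn n D f -> Cn n D (fun a b => - f a b).
Proof.
  intros Hf. apply Cn_ext with (fun a b => (fun _ _ => -1) a b * f a b).
  - intros; ring.
  - apply Cn_mult; [apply Cn_const|exact Hf].
Qed.

Lemma Cn_minus (n : nat) (f g : R -> R -> R) :
  Cn n D f -> Cn n D g -> Cn n D (fun a b => f a b - g a b).
Proof.
  intros Hf Hg. apply Cn_ext with (fun a b => f a b + (fun a b => - g a b) a b).
  - intros; reflexivity.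
  - apply Cn_plus; [exact Hf|apply Cn_opp, Hg].
Qed.

Lemma Cn_inv (n : nat) (f : R -> R -> R) : (forall a b, D a b -> f a b <> 0) ->
  Cn n D f -> Cn n D (fun a b => / f a b).
Proof.
  intros Hnz. induction n as [|n IHn]; intros Hf.
  - apply Cn_0; intros a b Hab; apply continuity_2d_pt_inv;
      [apply (Cn_continuity _ _ Hf)|]; auto.
  - assert (Pf := Cn_partials _ _ Hf).
    assert (Hi := IHn (Cn_le n (S n) f (le_S _ _ (le_n n)) Hf)).
    apply Cn_S.
    + intros a b Hab; destruct (Pf a b Hab); split; apply ex_derive_inv; auto.
    + apply Cn_ext with (fun a b => - (pu f a b * ((fun a b => / f a b) a b * (fun a b => / f a b) a b))).
      * intros a b Hab; destruct (Pf a b Hab); unfold pu.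
        rewrite Derive_inv; auto. field; auto.
      * apply Cn_opp, Cn_mult; [apply Cn_pu, Hf|apply Cn_mult; exact Hi].
    + apply Cn_ext with (fun a b => - (pv f a b * ((fun a b => / f a b) a b * (fun a b => / f a b) a b))).
      * intros a b Hab; destruct (Pf a b Hab); unfold pv.
        rewrite Derive_inv; auto.
        change (Derive (f a) b) with (Derive (fun s => f a s) b). field; auto.
      * apply Cn_opp, Cn_mult; [apply Cn_pv, Hf|apply Cn_mult; exact Hi].
Qed.

Lemma Cn_div (n : nat) (f g : R -> R -> R) : (forall a b, D a b -> g a b <> 0) ->
  Cn n D f -> Cn n D g -> Cn n D (fun a b => f a b / g a b).
Proof. intros Hnz Hf Hg. apply (Cn_mult n f (fun a b => / g a b)); [exact Hf|apply Cn_inv; auto]. Qed.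

End GradedSmoothness.

Section Composition.

Variables D E : R -> R -> Prop.
Hypotheses (D_open : open2 D) (E_open : open2 E).

Lemma is_derive_comp_2d (n : nat) (g p q : R -> R -> R) : Cn (S n) E g ->
  partials D p -> partials D q -> (forall a b, D a b -> E (p a b) (q a b)) ->
  forall a b, D a b ->
  is_derive (fun s => g (p s b) (q s b)) a
     (pu g (p a b) (q a b) * pu p a b + pv g (p a b) (q a b) * pu q a b) /\
  is_derive (fun s => g (p a s) (q a s)) b
     (pu g (p a b) (q a b) * pv p a b + pv g (p a b) (q a b) * pv q a b).
Proof.
  intros Hg Hp Hq Him a b Hab.
  assert (Hd : differentiable_pt_lim g (p a b) (q a b) (pu g (p a b) (q a b)) (pv g (p a b) (q a b))).
  { apply (partials_differentiable E E_open g (Cn_partials E _ _ Hg)); [|apply Him, Hab].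
    apply (Cn_continuity E n _ (Cn_pu E _ _ Hg)). }
  destruct (Hp a b Hab) as [Hp1 Hp2]; destruct (Hq a b Hab) as [Hq1 Hq2].
  split; apply is_derive_Reals.
  - apply (derivable_pt_lim_comp_2d g (fun s => p s b) (fun s => q s b)); [exact Hd| |];
      apply ex_derive_derivable_pt_lim; assumption.
  - apply (derivable_pt_lim_comp_2d g (fun s => p a s) (fun s => q a s)); [exact Hd| |];
      apply ex_derive_derivable_pt_lim; assumption.
Qed.

Lemma Cn_comp (n : nat) (g p q : R -> R -> R) :
  Cn n E g -> Cn n D p -> Cn n D q -> (forall a b, D a b -> E (p a b) (q a b)) ->
  Cn n D (fun a b => g (p a b) (q a b)).
Proof.
  revert g p q; induction n as [|n IHn]; intros g p q Hg Hp Hq Him.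
  - apply Cn_0; intros a b Hab. apply continuity_2d_pt_comp.
    + apply (Cn_continuity _ _ _ Hg), Him, Hab.
    + apply (Cn_continuity _ _ _ Hp), Hab.
    + apply (Cn_continuity _ _ _ Hq), Hab.
  - assert (Pp := Cn_partials _ _ _ Hp); assert (Pq := Cn_partials _ _ _ Hq).
    assert (Hp' := Cn_le D n (S n) p (le_S _ _ (le_n n)) Hp).
    assert (Hq' := Cn_le D n (S n) q (le_S _ _ (le_n n)) Hq).
    assert (CD := is_derive_comp_2d n g p q Hg Pp Pq Him).
    assert (Cpu : Cn n D (fun a b => pu g (p a b) (q a b))) by (apply IHn; auto; apply Cn_pu, Hg).
    assert (Cpv : Cn n D (fun a b => pv g (p a b) (q a b))) by (apply IHn; auto; apply Cn_pv, Hg).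
    apply Cn_S; auto.
    + intros a b Hab; destruct (CD a b Hab) as [H1 H2]; split; eexists; eassumption.
    + apply Cn_ext with (fun a b => pu g (p a b) (q a b) * pu p a b
          + pv g (p a b) (q a b) * pu q a b); auto.
      * intros a b Hab; symmetry; apply is_derive_unique, (CD a b Hab).
      * apply Cn_plus; auto; apply Cn_mult; auto; apply Cn_pu; auto.
    + apply Cn_ext with (fun a b => pu g (p a b) (q a b) * pv p a b
          + pv g (p a b) (q a b) * pv q a b); auto.
      * intros a b Hab; symmetry; apply is_derive_unique, (CD a b Hab).
      * apply Cn_plus; auto; apply Cn_mult; auto; apply Cn_pv; auto.
Qed.

End Composition.

Lemma dw_snoc (l : list bool) (c : bool) (f : R -> R -> R) :
  dw l ((if c then pv else pu) f) = dw (l ++ c :: nil) f.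
Proof. induction l; simpl; [reflexivity|rewrite IHl; reflexivity]. Qed.

Lemma smooth_on_pu (D : R -> R -> Prop) (f : R -> R -> R) :
  smooth_on D f -> smooth_on D (pu f).
Proof.
  intros H l a b Hab. generalize (H (l ++ false :: nil) a b Hab).
  rewrite <- (dw_snoc l false f). exact (fun P => P).
Qed.

Lemma smooth_on_pv (D : R -> R -> Prop) (f : R -> R -> R) :
  smooth_on D f -> smooth_on D (pv f).
Proof.
  intros H l a b Hab. generalize (H (l ++ true :: nil) a b Hab).
  rewrite <- (dw_snoc l true f). exact (fun P => P).
Qed.

Lemma smooth_on_Cn (D : R -> R -> Prop) (f : R -> R -> R) :
  smooth_on D f <-> forall n, Cn n D f.
Proof.
  split.
  - intros H n; revert f H; induction n as [|n IHn]; intros f H a b Hab.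
    + split; [exact (proj2 (proj2 (H nil a b Hab)))|exact I].
    + destruct (H nil a b Hab) as [H1 [H2 H3]].
      repeat split; try assumption; apply IHn; try exact Hab;
        [apply smooth_on_pu|apply smooth_on_pv]; exact H.
  - intros H l.
    assert (G : forall n, Cn n D (dw l f)).
    { induction l as [|c l IH]; intros n; simpl; [apply H|].
      destruct c; [apply (Cn_pv D n), IH|apply (Cn_pu D n), IH]. }
    intros a b Hab. destruct (G 1%nat a b Hab) as [H1 [H2 [H3 _]]]. auto.
Qed.

Section SmoothCalculus.

Variable D : R -> R -> Prop.
Hypothesis D_open : open2 D.

Lemma smooth_on_partials (f : R -> R -> R) : smooth_on D f -> partials D f.
Proof. intros H a b Hab. destruct (H nil a b Hab) as [H1 [H2 _]]. auto. Qed.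

Lemma smooth_on_sub (D' : R -> R -> Prop) (f : R -> R -> R) :
  (forall a b, D' a b -> D a b) -> smooth_on D f -> smooth_on D' f.
Proof. intros HD H l a b Hab. apply H, HD, Hab. Qed.

Lemma smooth_on_plus (f g : R -> R -> R) :
  smooth_on D f -> smooth_on D g -> smooth_on D (fun a b => f a b + g a b).
Proof. rewrite !smooth_on_Cn. intros Hf Hg n. apply Cn_plus; auto. Qed.

Lemma smooth_on_minus (f g : R -> R -> R) :
  smooth_on D f -> smooth_on D g -> smooth_on D (fun a b => f a b - g a b).
Proof. rewrite !smooth_on_Cn. intros Hf Hg n. apply Cn_minus; auto. Qed.

Lemma smooth_on_mult (f g : R -> R -> R) :
  smooth_on D f -> smooth_on D g -> smooth_on D (fun a b => f a b * g a b).
Proof. rewrite !smooth_on_Cn. intros Hf Hg n. apply Cn_mult; auto. Qed.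

Lemma smooth_on_div (f g : R -> R -> R) : (forall a b, D a b -> g a b <> 0) ->
  smooth_on D f -> smooth_on D g -> smooth_on D (fun a b => f a b / g a b).
Proof. rewrite !smooth_on_Cn. intros Hnz Hf Hg n. apply Cn_div; auto. Qed.

Lemma pu_ext_on (g k : R -> R -> R) : (forall a b, D a b -> g a b = k a b) ->
  forall a b, D a b -> pu g a b = pu k a b.
Proof.
  intros E a b Hab. unfold pu. apply Derive_ext_loc.
  destruct (open2_locally_2d D a b D_open Hab) as [d Hd]. exists d. intros y Hy.
  apply E, Hd; [exact Hy|rewrite Rminus_diag, Rabs_R0; apply cond_pos].
Qed.

Lemma pv_ext_on (g k : R -> R -> R) : (forall a b, D a b -> g a b = k a b) ->
  forall a b, D a b -> pv g a b = pv k a b.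
Proof.
  intros E a b Hab. unfold pv. apply Derive_ext_loc.
  destruct (open2_locally_2d D a b D_open Hab) as [d Hd]. exists d. intros y Hy.
  apply E, Hd; [rewrite Rminus_diag, Rabs_R0; apply cond_pos|exact Hy].
Qed.

Lemma Schwarz_on (f : R -> R -> R) : Cn 2 D f ->
  forall a b, D a b -> pu (pv f) a b = pv (pu f) a b.
Proof.
  intros Hf a b Hab.
  assert (Pf := Cn_partials D 1 _ Hf).
  assert (Pu := Cn_partials D 0 _ (Cn_pu D 1 _ Hf)).
  assert (Pv := Cn_partials D 0 _ (Cn_pv D 1 _ Hf)).
  unfold pu, pv. apply Schwarz.
  - destruct (open2_locally_2d D a b D_open Hab) as [d Hd]. exists d; intros u v Hu Hv.
    assert (Duv := Hd u v Hu Hv).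
    destruct (Pf u v Duv), (Pv u v Duv), (Pu u v Duv). repeat split; assumption.
  - exact (Cn_continuity D 0 _ (Cn_pu D 0 _ (Cn_pv D 1 _ Hf)) a b Hab).
  - exact (Cn_continuity D 0 _ (Cn_pv D 0 _ (Cn_pu D 1 _ Hf)) a b Hab).
Qed.

Lemma smooth_on_pu_pv (f : R -> R -> R) : smooth_on D f ->
  forall a b, D a b -> pu (pv f) a b = pv (pu f) a b.
Proof. intros Hf. apply Schwarz_on, smooth_on_Cn, Hf. Qed.

End SmoothCalculus.

Section PartialRules.

Variables (g k : R -> R -> R) (a b : R).

Lemma pu_plus : ex_derive (fun s => g s b) a -> ex_derive (fun s => k s b) a ->
  pu (fun a b => g a b + k a b) a b = pu g a b + pu k a b.
Proof. intros; unfold pu; rewrite Derive_plus; auto. Qed.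

Lemma pv_plus : ex_derive (fun s => g a s) b -> ex_derive (fun s => k a s) b ->
  pv (fun a b => g a b + k a b) a b = pv g a b + pv k a b.
Proof. intros; unfold pv; rewrite Derive_plus; auto. Qed.

Lemma pu_minus : ex_derive (fun s => g s b) a -> ex_derive (fun s => k s b) a ->
  pu (fun a b => g a b - k a b) a b = pu g a b - pu k a b.
Proof. intros; unfold pu; rewrite Derive_minus; auto. Qed.

Lemma pv_minus : ex_derive (fun s => g a s) b -> ex_derive (fun s => k a s) b ->
  pv (fun a b => g a b - k a b) a b = pv g a b - pv k a b.
Proof. intros; unfold pv; rewrite Derive_minus; auto. Qed.

Lemma pu_mult : ex_derive (fun s => g s b) a -> ex_derive (fun s => k s b) a ->
  pu (fun a b => g a b * k a b) a b = pu g a b * k a b + g a b * pu k a b.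
Proof. intros; unfold pu; rewrite Derive_mult; auto. Qed.

Lemma pv_mult : ex_derive (fun s => g a s) b -> ex_derive (fun s => k a s) b ->
  pv (fun a b => g a b * k a b) a b = pv g a b * k a b + g a b * pv k a b.
Proof. intros; unfold pv; rewrite Derive_mult; auto. Qed.

Lemma pu_div : ex_derive (fun s => g s b) a -> ex_derive (fun s => k s b) a -> k a b <> 0 ->
  pu (fun a b => g a b / k a b) a b = (pu g a b * k a b - g a b * pu k a b) / (k a b) ^ 2.
Proof. intros; unfold pu; rewrite Derive_div; auto. Qed.

Lemma pv_div : ex_derive (fun s => g a s) b -> ex_derive (fun s => k a s) b -> k a b <> 0 ->
  pv (fun a b => g a b / k a b) a b = (pv g a b * k a b - g a b * pv k a b) / (k a b) ^ 2.
Proof. intros; unfold pv; rewrite Derive_div; auto. Qed.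

End PartialRules.

(** * The inverse function theorem *)

Definition mx_close (e c11 c12 c21 c22 J11 J12 J21 J22 : R) : Prop :=
  Rabs (c11 - J11) <= e /\ Rabs (c12 - J12) <= e /\
  Rabs (c21 - J21) <= e /\ Rabs (c22 - J22) <= e.

Definition mx_size (J11 J12 J21 J22 : R) : R := 1 + Rabs J11 + Rabs J12 + Rabs J21 + Rabs J22.

Lemma mx_size_ge1 (J11 J12 J21 J22 : R) : 1 <= mx_size J11 J12 J21 J22.
Proof.
  unfold mx_size; assert (H1 := Rabs_pos J11); assert (H2 := Rabs_pos J12);
  assert (H3 := Rabs_pos J21); assert (H4 := Rabs_pos J22); lra.
Qed.

Lemma Rabs_le_bounds (x a : R) : Rabs x <= a -> - a <= x /\ x <= a.
Proof. intros H; unfold Rabs in H; destruct (Rcase_abs x); split; lra. Qed.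

Lemma Rabs_mult_le (x y K M : R) : Rabs x <= K -> Rabs y <= M -> Rabs (x * y) <= K * M.
Proof. intros. rewrite Rabs_mult. apply Rmult_le_compat; try apply Rabs_pos; assumption. Qed.

Lemma Rabs_mult_sub_le (x x0 y y0 e : R) : 0 <= e <= 1 ->
  Rabs (x - x0) <= e -> Rabs (y - y0) <= e ->
  Rabs (x * y - x0 * y0) <= e * (Rabs x0 + Rabs y0 + 1).
Proof.
  intros He Hx Hy.
  replace (x * y - x0 * y0) with ((x - x0) * (y - y0) + x0 * (y - y0) + (x - x0) * y0) by ring.
  eapply Rle_trans; [apply Rabs_triang|].
  eapply Rle_trans; [apply Rplus_le_compat_r, Rabs_triang|].
  rewrite !Rabs_mult.
  assert (H1 := Rabs_pos x0); assert (H2 := Rabs_pos y0).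
  assert (H3 := Rabs_pos (x - x0)); assert (H4 := Rabs_pos (y - y0)).
  assert (Rabs (x - x0) * Rabs (y - y0) <= e * 1) by (apply Rmult_le_compat; lra).
  assert (Rabs x0 * Rabs (y - y0) <= Rabs x0 * e) by (apply Rmult_le_compat_l; lra).
  assert (Rabs (x - x0) * Rabs y0 <= e * Rabs y0) by (apply Rmult_le_compat_r; lra).
  nra.
Qed.

Lemma det_close (J11 J12 J21 J22 c11 c12 c21 c22 e : R) : 0 <= e <= 1 ->
  mx_close e c11 c12 c21 c22 J11 J12 J21 J22 ->
  Rabs ((c11 * c22 - c12 * c21) - (J11 * J22 - J12 * J21)) <= 2 * e * mx_size J11 J12 J21 J22.
Proof.
  intros He [H1 [H2 [H3 H4]]].
  assert (A1 := Rabs_mult_sub_le c11 J11 c22 J22 e He H1 H4).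
  assert (A2 := Rabs_mult_sub_le c12 J12 c21 J21 e He H2 H3).
  replace ((c11 * c22 - c12 * c21) - (J11 * J22 - J12 * J21)) with
    ((c11 * c22 - J11 * J22) - (c12 * c21 - J12 * J21)) by ring.
  eapply Rle_trans; [apply Rabs_triang|]. rewrite Rabs_Ropp.
  unfold mx_size.
  assert (H5 := Rabs_pos J11); assert (H6 := Rabs_pos J12);
  assert (H7 := Rabs_pos J21); assert (H8 := Rabs_pos J22).
  assert (e * (Rabs J11 + Rabs J22 + 1) <= e * (1 + Rabs J11 + Rabs J12 + Rabs J21 + Rabs J22))
    by (apply Rmult_le_compat_l; lra).
  assert (e * (Rabs J12 + Rabs J21 + 1) <= e * (1 + Rabs J11 + Rabs J12 + Rabs J21 + Rabs J22))
    by (apply Rmult_le_compat_l; lra).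
  lra.
Qed.

Lemma Rabs_close_le (c J e : R) : e <= 1 -> Rabs (c - J) <= e -> Rabs c <= Rabs J + 1.
Proof.
  intros He H. replace c with ((c - J) + J) by ring.
  eapply Rle_trans; [apply Rabs_triang|]. lra.
Qed.

Lemma perturbed_mx_bounds (J11 J12 J21 J22 c11 c12 c21 c22 e : R) :
  J11 * J22 - J12 * J21 <> 0 -> 0 < e -> e <= 1 ->
  e <= Rabs (J11 * J22 - J12 * J21) / (4 * mx_size J11 J12 J21 J22) ->
  mx_close e c11 c12 c21 c22 J11 J12 J21 J22 ->
  Rabs (J11 * J22 - J12 * J21) / 2 <= Rabs (c11 * c22 - c12 * c21) /\
  (c11 * c22 - c12 * c21) * (J11 * J22 - J12 * J21) > 0 /\
  Rabs c11 <= mx_size J11 J12 J21 J22 /\ Rabs c12 <= mx_size J11 J12 J21 J22 /\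
  Rabs c21 <= mx_size J11 J12 J21 J22 /\ Rabs c22 <= mx_size J11 J12 J21 J22.
Proof.
  intros Hd He0 He1 He Hc.
  assert (HK := mx_size_ge1 J11 J12 J21 J22).
  assert (Hdc := det_close J11 J12 J21 J22 c11 c12 c21 c22 e (conj (Rlt_le _ _ He0) He1) Hc).
  destruct Hc as [H1 [H2 [H3 H4]]].
  set (K := mx_size J11 J12 J21 J22) in *.
  set (d0 := J11 * J22 - J12 * J21) in *. set (dc := c11 * c22 - c12 * c21) in *.
  assert (Hb : 2 * e * K <= Rabs d0 / 2).
  { apply Rmult_le_compat_r with (r := 4 * K) in He; [|lra].
    replace (Rabs d0 / (4 * K) * (4 * K)) with (Rabs d0) in He by (field; lra). lra. }
  assert (Hdd : Rabs (dc - d0) <= Rabs d0 / 2) by lra.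
  assert (HJ1 := Rabs_pos J11); assert (HJ2 := Rabs_pos J12).
  assert (HJ3 := Rabs_pos J21); assert (HJ4 := Rabs_pos J22).
  assert (B1 := Rabs_close_le c11 J11 e He1 H1). assert (B2 := Rabs_close_le c12 J12 e He1 H2).
  assert (B3 := Rabs_close_le c21 J21 e He1 H3). assert (B4 := Rabs_close_le c22 J22 e He1 H4).
  unfold K, mx_size.
  apply Rabs_le_bounds in Hdd.
  split; [|split; [|repeat split; lra]]; destruct (Rcase_abs d0) as [Hn|Hp].
  - rewrite (Rabs_left d0 Hn) in *. rewrite Rabs_left by lra. lra.
  - assert (d0 > 0) by (destruct (Req_dec d0 0); [contradiction|lra]).
    rewrite (Rabs_right d0 Hp) in *. rewrite Rabs_right by lra. lra.
  - rewrite (Rabs_left d0 Hn) in *. nra.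
  - assert (d0 > 0) by (destruct (Req_dec d0 0); [contradiction|lra]).
    rewrite (Rabs_right d0 Hp) in *. nra.
Qed.

Lemma perturbed_entry_bounds (c J e : R) : J <> 0 -> e <= Rabs J / 2 -> Rabs (c - J) <= e ->
  c * J > 0 /\ Rabs J / 2 <= Rabs c.
Proof.
  intros HJ He H. apply Rabs_le_bounds in H.
  destruct (Rcase_abs J) as [Hn|Hp].
  - rewrite (Rabs_left J Hn) in *. rewrite Rabs_left by lra. split; nra.
  - assert (J > 0) by (destruct (Req_dec J 0); [contradiction|lra]).
    rewrite (Rabs_right J Hp) in *. rewrite Rabs_right by lra. split; nra.
Qed.

(* Cramer's rule, as an estimate. *)
Lemma solve_2x2_bound (c11 c12 c21 c22 w1 w2 d1 d2 Dt K : R) : 0 < Dt -> 0 <= K ->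
  Dt / 2 <= Rabs (c11 * c22 - c12 * c21) ->
  Rabs c11 <= K -> Rabs c12 <= K -> Rabs c21 <= K -> Rabs c22 <= K ->
  d1 = c11 * w1 + c12 * w2 -> d2 = c21 * w1 + c22 * w2 ->
  Rabs w1 <= (4 * K / Dt) * Rmax (Rabs d1) (Rabs d2) /\
  Rabs w2 <= (4 * K / Dt) * Rmax (Rabs d1) (Rabs d2).
Proof.
  intros HD HK Hdet H1 H2 H3 H4 E1 E2.
  set (dc := c11 * c22 - c12 * c21) in *.
  set (M := Rmax (Rabs d1) (Rabs d2)).
  assert (M1 := Rmax_l (Rabs d1) (Rabs d2)); assert (M2 := Rmax_r (Rabs d1) (Rabs d2)).
  fold M in M1, M2.
  assert (G : forall w x y p q, w * dc = p * x - q * y -> Rabs p <= K -> Rabs q <= K ->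
                Rabs x <= M -> Rabs y <= M -> Rabs w <= 4 * K / Dt * M).
  { intros w x y p q Ew Hp Hq Hx Hy.
    assert (Hs : Rabs (p * x - q * y) <= 2 * K * M).
    { unfold Rminus. eapply Rle_trans; [apply Rabs_triang|]. rewrite Rabs_Ropp.
      assert (Hpx := Rabs_mult_le p x K M Hp Hx). assert (Hqy := Rabs_mult_le q y K M Hq Hy).
      lra. }
    rewrite <- Ew, Rabs_mult in Hs.
    assert (Hw := Rabs_pos w).
    assert (Rabs w * (Dt / 2) <= 2 * K * M).
    { eapply Rle_trans; [|exact Hs]. apply Rmult_le_compat_l; lra. }
    apply Rmult_le_reg_r with (Dt / 2); [lra|].
    replace (4 * K / Dt * M * (Dt / 2)) with (2 * K * M) by (field; lra). exact H. }
  split.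
  - apply (G w1 d1 d2 c22 c12); auto. rewrite E1, E2. unfold dc; ring.
  - apply (G w2 d2 d1 c11 c21); auto. rewrite E1, E2. unfold dc; ring.
Qed.

Definition mv_increments (F1 F2 : R -> R -> R) (a0 b0 rho J11 J12 J21 J22 e : R) :=
  forall a b a' b', sq a0 b0 rho a b -> sq a0 b0 rho a' b' ->
  exists c11 c12 c21 c22, mx_close e c11 c12 c21 c22 J11 J12 J21 J22 /\
    F1 a' b' - F1 a b = c11 * (a' - a) + c12 * (b' - b) /\
    F2 a' b' - F2 a b = c21 * (a' - a) + c22 * (b' - b).

Lemma mv_increments_of_partials (F1 F2 : R -> R -> R) (a0 b0 rho J11 J12 J21 J22 e : R) :
  partials (sq a0 b0 rho) F1 -> partials (sq a0 b0 rho) F2 ->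
  (forall a b, sq a0 b0 rho a b ->
     mx_close e (pu F1 a b) (pv F1 a b) (pu F2 a b) (pv F2 a b) J11 J12 J21 J22) ->
  mv_increments F1 F2 a0 b0 rho J11 J12 J21 J22 e.
Proof.
  intros P1 P2 Hc a b a' b' Hz Hz'.
  destruct (increment_sq F1 a0 b0 rho a b a' b' P1 Hz Hz') as [x1 [y1 [Hx1 [Hy1 E1]]]].
  destruct (increment_sq F2 a0 b0 rho a b a' b' P2 Hz Hz') as [x2 [y2 [Hx2 [Hy2 E2]]]].
  destruct Hz as [Hz1 Hz2]; destruct Hz' as [Hz1' Hz2'].
  assert (S1 : sq a0 b0 rho x1 b') by (split; [exact (Rabs_between_lt a a' x1 a0 rho Hx1 Hz1 Hz1')|exact Hz2']).
  assert (S2 : sq a0 b0 rho a y1) by (split; [exact Hz1|exact (Rabs_between_lt b b' y1 b0 rho Hy1 Hz2 Hz2')]).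
  assert (S3 : sq a0 b0 rho x2 b') by (split; [exact (Rabs_between_lt a a' x2 a0 rho Hx2 Hz1 Hz1')|exact Hz2']).
  assert (S4 : sq a0 b0 rho a y2) by (split; [exact Hz1|exact (Rabs_between_lt b b' y2 b0 rho Hy2 Hz2 Hz2')]).
  exists (pu F1 x1 b'), (pv F1 a y1), (pu F2 x2 b'), (pv F2 a y2).
  destruct (Hc _ _ S1) as [C1 _]. destruct (Hc _ _ S2) as [_ [C2 _]].
  destruct (Hc _ _ S3) as [_ [_ [C3 _]]]. destruct (Hc _ _ S4) as [_ [_ [_ C4]]].
  repeat split; assumption.
Qed.

Lemma IVT_sign_change (f : R -> R) (lo hi y : R) : lo <= hi ->
  (forall x, lo <= x <= hi -> continuity_pt f x) ->
  (f lo - y) * (f hi - y) <= 0 -> exists x, lo <= x <= hi /\ f x = y.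
Proof.
  intros Hle Hc Hs.
  destruct (Req_dec (f lo) y) as [E|E]; [exists lo; split; [lra|exact E]|].
  destruct (Req_dec (f hi) y) as [E'|E']; [exists hi; split; [lra|exact E']|].
  assert (Hlt : lo < hi).
  { destruct (Req_dec lo hi) as [El|El]; [|lra]. subst hi.
    assert (f lo - y <> 0) by lra. assert ((f lo - y) * (f lo - y) > 0) by nra. lra. }
  assert (Hcy : forall x, lo <= x <= hi -> continuity_pt (fun x => f x - y) x).
  { intros x Hx. apply continuity_pt_minus; [apply Hc, Hx|apply continuity_pt_const].
    intros u v; reflexivity. }
  destruct (Rlt_dec (f lo) y) as [Hl|Hl].
  - assert (y < f hi) by (destruct (Rlt_dec y (f hi)); [assumption|nra]).
    destruct (Ranalysis5.IVT_interv (fun x => f x - y) lo hi Hcy Hlt) as [z [Hz Ez]]; try lra.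
    exists z; split; [exact Hz|lra].
  - assert (f hi < y) by (destruct (Rlt_dec (f hi) y); [assumption|nra]).
    destruct (Ranalysis5.IVT_interv (fun x => - (f x - y)) lo hi) as [z [Hz Ez]]; try lra.
    + intros x Hx. apply continuity_pt_opp, Hcy, Hx.
    + exists z; split; [exact Hz|lra].
Qed.

Lemma continuity_pt_lipschitz_at (f : R -> R) (x eta C : R) : 0 < eta -> 0 <= C ->
  (forall x', Rabs (x' - x) < eta -> Rabs (f x' - f x) <= C * Rabs (x' - x)) ->
  continuity_pt f x.
Proof.
  intros He HC H eps Heps.
  exists (Rmin eta (eps / (C + 1))); split.
  - apply Rmin_glb_lt; [lra|]. apply Rdiv_lt_0_compat; lra.
  - intros x' [_ Hx']. simpl in *. unfold R_dist in *.
    assert (H1 := Rmin_l eta (eps / (C + 1))); assert (H2 := Rmin_r eta (eps / (C + 1))).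
    eapply Rle_lt_trans; [apply H; lra|].
    assert (Hp := Rabs_pos (x' - x)).
    assert ((C + 1) * Rabs (x' - x) < eps).
    { apply Rmult_lt_reg_r with (/ (C + 1)); [apply Rinv_0_lt_compat; lra|].
      replace ((C + 1) * Rabs (x' - x) * / (C + 1)) with (Rabs (x' - x)) by (field; lra).
      lra. }
    nra.
Qed.

(* Surjectivity near [(a0, b0)], for [J11 <> 0]: first solve [F1 (., b) = y1] by the
   intermediate value theorem, giving [a = alpha y1 b]; then [b |-> F2 (alpha y1 b) b]
   has slope [det c / c11], bounded away from 0 with a constant sign, so a second
   intermediate value argument solves [F2 = y2]. *)
Section LocalSurjectivity.

Variables (F1 F2 : R -> R -> R) (a0 b0 rho J11 J12 J21 J22 e : R).
Hypothesis rho_pos : 0 < rho.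
Hypothesis F1_partials : partials (sq a0 b0 rho) F1.
Hypothesis J11_neq0 : J11 <> 0.
Hypothesis det_neq0 : J11 * J22 - J12 * J21 <> 0.
Hypothesis e_pos : 0 < e.
Hypothesis e_le1 : e <= 1.
Hypothesis e_le_det : e <= Rabs (J11 * J22 - J12 * J21) / (4 * mx_size J11 J12 J21 J22).
Hypothesis e_le_J11 : e <= Rabs J11 / 2.
Hypothesis increments : mv_increments F1 F2 a0 b0 rho J11 J12 J21 J22 e.

Let K := mx_size J11 J12 J21 J22.
Let Dt := Rabs (J11 * J22 - J12 * J21).
Let m := Rabs J11 / 2.

Let K_ge1 : 1 <= K.
Proof. apply mx_size_ge1. Qed.

Let m_pos : 0 < m.
Proof. unfold m. assert (Rabs J11 > 0) by (apply Rabs_pos_lt; exact J11_neq0). lra. Qed.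

Let m_le_K : m <= K.
Proof.
  unfold m, K, mx_size. assert (H1 := Rabs_pos J11); assert (H2 := Rabs_pos J12);
  assert (H3 := Rabs_pos J21); assert (H4 := Rabs_pos J22). lra.
Qed.

Let Dt_pos : 0 < Dt.
Proof. apply Rabs_pos_lt; exact det_neq0. Qed.

Let close_mx_bounds (c11 c12 c21 c22 : R) : mx_close e c11 c12 c21 c22 J11 J12 J21 J22 ->
  Dt / 2 <= Rabs (c11 * c22 - c12 * c21) /\
  (c11 * c22 - c12 * c21) * (J11 * J22 - J12 * J21) > 0 /\
  Rabs c11 <= K /\ Rabs c12 <= K /\ Rabs c21 <= K /\ Rabs c22 <= K /\
  c11 * J11 > 0 /\ m <= Rabs c11.
Proof.
  intros Hc.
  destruct (perturbed_mx_bounds J11 J12 J21 J22 c11 c12 c21 c22 e det_neq0 e_pos e_le1 e_le_det Hc)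
    as [A1 [A2 [A3 [A4 [A5 A6]]]]].
  destruct (perturbed_entry_bounds c11 J11 e J11_neq0 e_le_J11 (proj1 Hc)) as [B1 B2].
  repeat split; assumption.
Qed.

Let delta := rho / 2.
Let d1 := m * delta / (4 * K).
Let d2 := d1 / 2.
Let s1 := m * delta / 4.
Let s2 := Dt * d2 / (4 * K * (1 + K / m)).

Let radii_pos : 0 < delta /\ delta < rho /\ 0 < d1 /\ d1 <= delta / 4 /\ 0 < d2 /\ d2 < d1
  /\ 0 < s1 /\ 0 < s2.
Proof.
  assert (HK := K_ge1); assert (Hm := m_pos); assert (HmK := m_le_K); assert (HD := Dt_pos).
  unfold s2, s1, d2, d1, delta.
  assert (0 < m * (rho / 2) / (4 * K)) by (apply Rdiv_lt_0_compat; nra).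
  assert (m * (rho / 2) / (4 * K) <= rho / 2 / 4).
  { apply Rmult_le_reg_r with (4 * K); [lra|].
    replace (m * (rho / 2) / (4 * K) * (4 * K)) with (m * (rho / 2)) by (field; lra). nra. }
  assert (0 < K / m) by (apply Rdiv_lt_0_compat; lra).
  repeat split; try lra.
  - nra.
  - apply Rdiv_lt_0_compat; nra.
Qed.

Let sq_of_bounds (a b : R) : Rabs (a - a0) <= delta -> Rabs (b - b0) < d1 -> sq a0 b0 rho a b.
Proof. intros Ha Hb. destruct radii_pos as [_ [Hdr [_ [Hd1d _]]]]. split; lra. Qed.

Lemma first_root_exists (y1 b : R) : Rabs (y1 - F1 a0 b0) < s1 -> Rabs (b - b0) < d1 ->
  exists a, Rabs (a - a0) <= delta /\ F1 a b = y1.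
Proof.
  intros Hy Hb.
  destruct radii_pos as [Hde [Hdr [Hd1 [Hd1d _]]]].
  assert (HK := K_ge1); assert (Hm := m_pos).
  assert (Sp : sq a0 b0 rho a0 b0) by (apply sq_center; lra).
  assert (Edge : forall s, s = delta \/ s = - delta -> exists c, m <= Rabs c /\ c * J11 > 0 /\
             F1 (a0 + s) b - y1 = c * s + (F1 (a0 + s) b - F1 a0 b0 - c * s) - (y1 - F1 a0 b0) /\
             Rabs (F1 (a0 + s) b - F1 a0 b0 - c * s) <= m * delta / 4).
  { intros s Hs.
    assert (Ss : sq a0 b0 rho (a0 + s) b).
    { apply sq_of_bounds; [|lra]. replace (a0 + s - a0) with s by ring.
      destruct Hs as [->| ->]; [rewrite Rabs_right|rewrite Rabs_Ropp, Rabs_right]; lra. }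
    destruct (increments a0 b0 (a0 + s) b Sp Ss) as [c11 [c12 [c21 [c22 [Hc [E1 _]]]]]].
    destruct (close_mx_bounds c11 c12 c21 c22 Hc) as [_ [_ [_ [K12 [_ [_ [S11 M11]]]]]]].
    exists c11. split; [exact M11|split; [exact S11|split; [ring|]]].
    rewrite E1. replace (c11 * (a0 + s - a0) + c12 * (b - b0) - c11 * s) with (c12 * (b - b0)) by ring.
    replace (m * delta / 4) with (K * d1) by (unfold d1; field; lra).
    apply Rabs_mult_le; lra. }
  destruct (Edge delta (or_introl eq_refl)) as [cp [Mp [Sgp [Ep Rp]]]].
  destruct (Edge (- delta) (or_intror eq_refl)) as [cm [Mm [Sgm [Em Rm]]]].
  apply Rabs_le_bounds in Rp; apply Rabs_le_bounds in Rm. apply Rabs_def2 in Hy.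
  assert (Hmd : 0 < m * delta) by nra.
  destruct (IVT_sign_change (fun s => F1 s b) (a0 - delta) (a0 + delta) y1) as [a [Ha Ea]].
  - lra.
  - intros x Hx. apply ex_derive_continuity_pt. refine (proj1 (F1_partials x b _)).
    split; [apply Rabs_def1|]; lra.
  - replace (a0 - delta) with (a0 + - delta) by ring. rewrite Ep, Em.
    destruct (Rlt_dec 0 J11) as [Jp|Jn].
    + assert (0 < cp) by nra. assert (0 < cm) by nra.
      rewrite Rabs_right in Mp, Mm by lra.
      assert (m * delta <= cp * delta) by nra. assert (m * delta <= cm * delta) by nra.
      apply Rmult_le_0_r; unfold s1 in Hy; lra.
    + assert (J11 < 0) by (destruct (Req_dec J11 0); [contradiction|lra]).
      assert (cp < 0) by nra. assert (cm < 0) by nra.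
      rewrite Rabs_left in Mp, Mm by lra.
      assert (m * delta <= - cp * delta) by nra. assert (m * delta <= - cm * delta) by nra.
      apply Rmult_le_0_l; unfold s1 in Hy; lra.
  - exists a; split; [apply Rabs_le; lra|exact Ea].
Qed.

Definition alpha (y1 b : R) : R :=
  epsilon (inhabits 0) (fun a => Rabs (a - a0) <= delta /\ F1 a b = y1).

Lemma alpha_spec (y1 b : R) : Rabs (y1 - F1 a0 b0) < s1 -> Rabs (b - b0) < d1 ->
  Rabs (alpha y1 b - a0) <= delta /\ F1 (alpha y1 b) b = y1.
Proof. intros Hy Hb. unfold alpha. apply epsilon_spec, first_root_exists; assumption. Qed.

Lemma alpha_slope (y1 b b' : R) :
  Rabs (y1 - F1 a0 b0) < s1 -> Rabs (b - b0) < d1 -> Rabs (b' - b0) < d1 ->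
  exists S, F2 (alpha y1 b') b' - F2 (alpha y1 b) b = S * (b' - b) /\
    Dt / (2 * K) <= Rabs S /\ Rabs S <= 2 * K * K / m /\
    S * ((J11 * J22 - J12 * J21) * J11) > 0.
Proof.
  intros Hy Hb Hb'.
  destruct (alpha_spec y1 b Hy Hb) as [A1 A2].
  destruct (alpha_spec y1 b' Hy Hb') as [A1' A2'].
  destruct (increments _ _ _ _ (sq_of_bounds _ _ A1 Hb) (sq_of_bounds _ _ A1' Hb'))
    as [c11 [c12 [c21 [c22 [Hc [E1 E2]]]]]].
  destruct (close_mx_bounds c11 c12 c21 c22 Hc) as [D1 [D2 [K11 [K12 [K21 [K22 [S11 M11]]]]]]].
  assert (Hm := m_pos); assert (HK := K_ge1); assert (HD := Dt_pos).
  assert (Hc11 : c11 <> 0) by (intro Z; rewrite Z, Rabs_R0 in M11; lra).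
  exists ((c11 * c22 - c12 * c21) / c11). split; [|split; [|split]].
  - rewrite A2, A2' in E1.
    assert (Eda : alpha y1 b' - alpha y1 b = - c12 * (b' - b) / c11).
    { apply Rmult_eq_reg_l with c11; [|exact Hc11]. field_simplify; [lra|exact Hc11]. }
    rewrite E2, Eda. field. exact Hc11.
  - unfold Rdiv. rewrite Rabs_mult, Rabs_inv.
    apply Rle_trans with ((Dt / 2) * / K); [right; field; lra|].
    apply Rle_trans with ((Dt / 2) * / Rabs c11).
    + apply Rmult_le_compat_l; [lra|]. apply Rinv_le_contravar; lra.
    + apply Rmult_le_compat_r; [apply Rlt_le, Rinv_0_lt_compat; lra|lra].
  - unfold Rdiv. rewrite Rabs_mult, Rabs_inv.
    assert (Hdc : Rabs (c11 * c22 - c12 * c21) <= 2 * K * K).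
    { unfold Rminus. eapply Rle_trans; [apply Rabs_triang|]. rewrite Rabs_Ropp.
      assert (T1 := Rabs_mult_le c11 c22 K K K11 K22).
      assert (T2 := Rabs_mult_le c12 c21 K K K12 K21). lra. }
    assert (Hi : / Rabs c11 <= / m) by (apply Rinv_le_contravar; lra).
    assert (0 <= / Rabs c11) by (apply Rlt_le, Rinv_0_lt_compat; lra).
    apply Rmult_le_compat; try lra; apply Rabs_pos.
  - set (dc := c11 * c22 - c12 * c21) in *. set (d0 := J11 * J22 - J12 * J21) in *.
    replace (dc / c11 * (d0 * J11)) with ((dc * d0) * (c11 * J11) / (c11 * c11))
      by (field; exact Hc11).
    apply Rdiv_lt_0_compat; [nra|]. nra.
Qed.

Lemma alpha_graph_continuity (y1 b : R) : Rabs (y1 - F1 a0 b0) < s1 -> Rabs (b - b0) <= d2 ->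
  continuity_pt (fun s => F2 (alpha y1 s) s) b.
Proof.
  intros Hy Hb.
  destruct radii_pos as [_ [_ [_ [_ [Hd2 [Hd21 _]]]]]].
  assert (HK := K_ge1); assert (Hm := m_pos).
  apply continuity_pt_lipschitz_at with (eta := d1 - d2) (C := 2 * K * K / m).
  - lra.
  - apply Rlt_le, Rdiv_lt_0_compat; nra.
  - intros b' Hb'.
    assert (Hb'0 : Rabs (b' - b0) < d1).
    { replace (b' - b0) with ((b' - b) + (b - b0)) by ring.
      eapply Rle_lt_trans; [apply Rabs_triang|]. lra. }
    destruct (alpha_slope y1 b b' Hy ltac:(lra) Hb'0) as [S [E [_ [HS _]]]].
    rewrite E, Rabs_mult. apply Rmult_le_compat_r; [apply Rabs_pos|exact HS].
Qed.

Lemma alpha_graph_center (y1 : R) : Rabs (y1 - F1 a0 b0) < s1 ->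
  Rabs (F2 (alpha y1 b0) b0 - F2 a0 b0) * m <= K * Rabs (y1 - F1 a0 b0).
Proof.
  intros Hy.
  destruct radii_pos as [_ [_ [Hd1 _]]]. assert (Hm := m_pos); assert (HK := K_ge1).
  assert (Hb0 : Rabs (b0 - b0) < d1) by (rewrite Rminus_diag, Rabs_R0; lra).
  destruct (alpha_spec y1 b0 Hy Hb0) as [Al0 Al1].
  assert (Sp : sq a0 b0 rho a0 b0) by (apply sq_center; lra).
  destruct (increments a0 b0 (alpha y1 b0) b0 Sp (sq_of_bounds _ _ Al0 Hb0))
    as [c11 [c12 [c21 [c22 [Hc [E1 E2]]]]]].
  destruct (close_mx_bounds c11 c12 c21 c22 Hc) as [_ [_ [_ [_ [K21 [_ [_ M11]]]]]]].
  rewrite Al1, Rminus_diag, Rmult_0_r, Rplus_0_r in E1.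
  rewrite Rminus_diag, Rmult_0_r, Rplus_0_r in E2.
  rewrite E1, E2, !Rabs_mult.
  assert (Hp := Rabs_pos (alpha y1 b0 - a0)).
  apply Rle_trans with (K * Rabs (alpha y1 b0 - a0) * m).
  - apply Rmult_le_compat_r; [lra|]. apply Rmult_le_compat_r; lra.
  - replace (K * (Rabs c11 * Rabs (alpha y1 b0 - a0)))
      with (K * Rabs (alpha y1 b0 - a0) * Rabs c11) by ring.
    apply Rmult_le_compat_l; [apply Rmult_le_pos|]; lra.
Qed.

Lemma alpha_graph_sign_change (y1 y2 : R) :
  Rabs (y1 - F1 a0 b0) < Rmin s1 s2 -> Rabs (y2 - F2 a0 b0) < Rmin s1 s2 ->
  (F2 (alpha y1 (b0 - d2)) (b0 - d2) - y2) * (F2 (alpha y1 (b0 + d2)) (b0 + d2) - y2) <= 0.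
Proof.
  intros Hy1 Hy2.
  destruct radii_pos as [Hde [Hdr [Hd1 [Hd1d [Hd2 [Hd21 [Hs1 Hs2]]]]]]].
  assert (HK := K_ge1); assert (Hm := m_pos); assert (HD := Dt_pos).
  assert (Ms1 := Rmin_l s1 s2); assert (Ms2 := Rmin_r s1 s2).
  assert (Hy1' : Rabs (y1 - F1 a0 b0) < s1) by lra.
  set (k := fun s => F2 (alpha y1 s) s). change (F2 (alpha y1 ?s) ?s) with (k s).
  assert (Hb0 : Rabs (b0 - b0) < d1) by (rewrite Rminus_diag, Rabs_R0; lra).
  assert (Hbp : Rabs (b0 + d2 - b0) < d1)
    by (replace (b0 + d2 - b0) with d2 by ring; rewrite Rabs_right; lra).
  assert (Hbm : Rabs (b0 - d2 - b0) < d1)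
    by (replace (b0 - d2 - b0) with (- d2) by ring; rewrite Rabs_Ropp, Rabs_right; lra).
  destruct (alpha_slope y1 b0 (b0 + d2) Hy1' Hb0 Hbp) as [Sp [Ep [Ap [_ Pp]]]].
  destruct (alpha_slope y1 b0 (b0 - d2) Hy1' Hb0 Hbm) as [Sm [Em [Am [_ Pm]]]].
  replace (b0 + d2 - b0) with d2 in Ep by ring.
  replace (b0 - d2 - b0) with (- d2) in Em by ring.
  (* [k b0] is within [T / 2] of [y2], while [k] moves by at least [T] on each side. *)
  set (T := Dt * d2 / (2 * K)).
  assert (Hw : Rabs (y2 - k b0) <= T / 2).
  { assert (Hc := alpha_graph_center y1 Hy1'). fold (k b0) in Hc.
    assert (Hkc : Rabs (k b0 - F2 a0 b0) <= K * s2 / m).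
    { apply Rmult_le_reg_r with m; [lra|].
      replace (K * s2 / m * m) with (K * s2) by (field; lra). nra. }
    replace (y2 - k b0) with ((y2 - F2 a0 b0) - (k b0 - F2 a0 b0)) by ring.
    unfold Rminus at 1. eapply Rle_trans; [apply Rabs_triang|]. rewrite Rabs_Ropp.
    replace (T / 2) with (s2 + K * s2 / m)
      by (unfold T, s2; field; repeat split; try lra; apply Rgt_not_eq;
          replace (1 + K / m) with ((m + K) / m) by (field; lra);
          apply Rdiv_lt_0_compat; lra).
    lra. }
  assert (HTp : T <= Rabs Sp * d2) by
    (unfold T; replace (Dt * d2 / (2 * K)) with (Dt / (2 * K) * d2) by (field; lra);
     apply Rmult_le_compat_r; lra).
  assert (HTm : T <= Rabs Sm * d2) by
    (unfold T; replace (Dt * d2 / (2 * K)) with (Dt / (2 * K) * d2) by (field; lra);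
     apply Rmult_le_compat_r; lra).
  apply Rabs_le_bounds in Hw.
  replace (k (b0 + d2) - y2) with (Sp * d2 - (y2 - k b0)) by (unfold k; cbv beta; lra).
  replace (k (b0 - d2) - y2) with (- Sm * d2 - (y2 - k b0)) by (unfold k; cbv beta; lra).
  set (q := (J11 * J22 - J12 * J21) * J11) in *.
  destruct (Rlt_dec 0 q) as [Q|Q].
  - assert (0 < Sp) by nra. assert (0 < Sm) by nra.
    rewrite Rabs_right in HTp, HTm by lra. apply Rmult_le_0_r; lra.
  - assert (Sp < 0) by nra. assert (Sm < 0) by nra.
    rewrite Rabs_left in HTp, HTm by lra. apply Rmult_le_0_l; lra.
Qed.

Lemma local_surjectivity : exists sig, 0 < sig /\ forall y1 y2,
  sq (F1 a0 b0) (F2 a0 b0) sig y1 y2 ->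
  exists a b, sq a0 b0 rho a b /\ F1 a b = y1 /\ F2 a b = y2.
Proof.
  destruct radii_pos as [_ [_ [Hd1 [_ [Hd2 [Hd21 [Hs1 Hs2]]]]]]].
  exists (Rmin s1 s2); split; [apply Rmin_glb_lt; assumption|].
  intros y1 y2 [Hy1 Hy2].
  assert (Hy1' : Rabs (y1 - F1 a0 b0) < s1) by (assert (Ms1 := Rmin_l s1 s2); lra).
  destruct (IVT_sign_change (fun s => F2 (alpha y1 s) s) (b0 - d2) (b0 + d2) y2) as [b [Hb Eb]].
  - lra.
  - intros x Hx. apply alpha_graph_continuity; [exact Hy1'|]. apply Rabs_le; lra.
  - exact (alpha_graph_sign_change y1 y2 Hy1 Hy2).
  - assert (Hb' : Rabs (b - b0) < d1) by (apply Rabs_def1; lra).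
    destruct (alpha_spec y1 b Hy1' Hb') as [B1 B2].
    exists (alpha y1 b), b. split; [apply sq_of_bounds; assumption|split; [exact B2|exact Eb]].
Qed.

End LocalSurjectivity.

Definition jdet (F1 F2 : R -> R -> R) (a b : R) : R :=
  pu F1 a b * pv F2 a b - pv F1 a b * pu F2 a b.

Definition locally_invertible (F1 F2 : R -> R -> R) (a0 b0 r : R) :=
  exists rho sig L, 0 < rho /\ rho <= r /\ 0 < sig /\ 0 <= L /\
  (forall a b a' b', sq a0 b0 rho a b -> sq a0 b0 rho a' b' ->
     Rabs (a' - a) <= L * Rmax (Rabs (F1 a' b' - F1 a b)) (Rabs (F2 a' b' - F2 a b)) /\
     Rabs (b' - b) <= L * Rmax (Rabs (F1 a' b' - F1 a b)) (Rabs (F2 a' b' - F2 a b))) /\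
  (forall y1 y2, sq (F1 a0 b0) (F2 a0 b0) sig y1 y2 ->
     exists a b, sq a0 b0 rho a b /\ F1 a b = y1 /\ F2 a b = y2).

Lemma partials_close_near (F1 F2 : R -> R -> R) (a0 b0 r e : R) : 0 < r -> 0 < e ->
  continuity_2d_pt (pu F1) a0 b0 -> continuity_2d_pt (pv F1) a0 b0 ->
  continuity_2d_pt (pu F2) a0 b0 -> continuity_2d_pt (pv F2) a0 b0 ->
  exists rho, 0 < rho /\ rho <= r /\ forall a b, sq a0 b0 rho a b ->
    mx_close e (pu F1 a b) (pv F1 a b) (pu F2 a b) (pv F2 a b)
               (pu F1 a0 b0) (pv F1 a0 b0) (pu F2 a0 b0) (pv F2 a0 b0).
Proof.
  intros Hr He C11 C12 C21 C22.
  destruct (C11 (mkposreal e He)) as [d11 B11]. destruct (C12 (mkposreal e He)) as [d12 B12].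
  destruct (C21 (mkposreal e He)) as [d21 B21]. destruct (C22 (mkposreal e He)) as [d22 B22].
  set (rho := Rmin r (Rmin (Rmin d11 d12) (Rmin d21 d22))).
  assert (R1 := Rmin_l r (Rmin (Rmin d11 d12) (Rmin d21 d22))).
  assert (R2 := Rmin_r r (Rmin (Rmin d11 d12) (Rmin d21 d22))).
  assert (R3 := Rmin_l (Rmin d11 d12) (Rmin d21 d22)).
  assert (R4 := Rmin_r (Rmin d11 d12) (Rmin d21 d22)).
  assert (R5 := Rmin_l d11 d12). assert (R6 := Rmin_r d11 d12).
  assert (R7 := Rmin_l d21 d22). assert (R8 := Rmin_r d21 d22).
  fold rho in R1, R2.
  exists rho. split; [unfold rho; repeat apply Rmin_glb_lt; try apply cond_pos; exact Hr|].
  split; [exact R1|]. intros a b [Ha Hb]. simpl in *.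
  repeat split; apply Rlt_le; [apply B11|apply B12|apply B21|apply B22]; lra.
Qed.

Lemma locally_invertible_J11 (F1 F2 : R -> R -> R) (a0 b0 r : R) : 0 < r ->
  partials (sq a0 b0 r) F1 -> partials (sq a0 b0 r) F2 ->
  continuity_2d_pt (pu F1) a0 b0 -> continuity_2d_pt (pv F1) a0 b0 ->
  continuity_2d_pt (pu F2) a0 b0 -> continuity_2d_pt (pv F2) a0 b0 ->
  pu F1 a0 b0 <> 0 -> jdet F1 F2 a0 b0 <> 0 -> locally_invertible F1 F2 a0 b0 r.
Proof.
  intros Hr P1 P2 C11 C12 C21 C22 HJ Hdet. unfold jdet in Hdet.
  set (J11 := pu F1 a0 b0) in *. set (J12 := pv F1 a0 b0) in *.
  set (J21 := pu F2 a0 b0) in *. set (J22 := pv F2 a0 b0) in *.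
  set (K := mx_size J11 J12 J21 J22). assert (HK := mx_size_ge1 J11 J12 J21 J22). fold K in HK.
  set (Dt := Rabs (J11 * J22 - J12 * J21)).
  assert (HD : 0 < Dt) by (apply Rabs_pos_lt; exact Hdet).
  assert (HJa : 0 < Rabs J11) by (apply Rabs_pos_lt; exact HJ).
  set (e := Rmin 1 (Rmin (Dt / (4 * K)) (Rabs J11 / 2))).
  assert (E1 := Rmin_l 1 (Rmin (Dt / (4 * K)) (Rabs J11 / 2))).
  assert (E2 := Rmin_r 1 (Rmin (Dt / (4 * K)) (Rabs J11 / 2))).
  assert (E3 := Rmin_l (Dt / (4 * K)) (Rabs J11 / 2)).
  assert (E4 := Rmin_r (Dt / (4 * K)) (Rabs J11 / 2)).
  fold e in E1, E2.
  assert (He : 0 < e).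
  { unfold e. apply Rmin_glb_lt; [lra|apply Rmin_glb_lt; [apply Rdiv_lt_0_compat; lra|lra]]. }
  destruct (partials_close_near F1 F2 a0 b0 r e Hr He C11 C12 C21 C22) as [rho [Hrho [Hrr Hclose]]].
  assert (Hsub : forall a b, sq a0 b0 rho a b -> sq a0 b0 r a b) by (intros; eapply sq_le; eauto).
  assert (P1' : partials (sq a0 b0 rho) F1) by (intros a b Hab; apply P1, Hsub, Hab).
  assert (P2' : partials (sq a0 b0 rho) F2) by (intros a b Hab; apply P2, Hsub, Hab).
  assert (HB := mv_increments_of_partials F1 F2 a0 b0 rho J11 J12 J21 J22 e P1' P2' Hclose).
  assert (He1 : e <= 1) by lra. assert (He2 : e <= Dt / (4 * K)) by lra.
  assert (He3 : e <= Rabs J11 / 2) by lra.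
  destruct (local_surjectivity F1 F2 a0 b0 rho J11 J12 J21 J22 e Hrho P1' HJ Hdet He
              He1 He2 He3 HB) as [sig [Hsig Hex]].
  exists rho, sig, (4 * K / Dt).
  do 3 (split; [assumption|]). split; [apply Rlt_le, Rdiv_lt_0_compat; lra|].
  split; [|exact Hex].
  intros a b a' b' Hz Hz'.
  destruct (HB a b a' b' Hz Hz') as [c11 [c12 [c21 [c22 [Hc [Eq1 Eq2]]]]]].
  destruct (perturbed_mx_bounds J11 J12 J21 J22 c11 c12 c21 c22 e Hdet He He1 He2 Hc)
    as [A1 [_ [A3 [A4 [A5 A6]]]]].
  exact (solve_2x2_bound c11 c12 c21 c22 (a' - a) (b' - b) _ _ Dt K HD ltac:(lra)
           A1 A3 A4 A5 A6 Eq1 Eq2).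
Qed.

(* If [J11 = 0] then [J12 <> 0]: exchange the roles of the two variables. *)
Lemma locally_invertible_of_jdet (F1 F2 : R -> R -> R) (a0 b0 r : R) : 0 < r ->
  partials (sq a0 b0 r) F1 -> partials (sq a0 b0 r) F2 ->
  continuity_2d_pt (pu F1) a0 b0 -> continuity_2d_pt (pv F1) a0 b0 ->
  continuity_2d_pt (pu F2) a0 b0 -> continuity_2d_pt (pv F2) a0 b0 ->
  jdet F1 F2 a0 b0 <> 0 -> locally_invertible F1 F2 a0 b0 r.
Proof.
  intros Hr P1 P2 C11 C12 C21 C22 Hdet.
  destruct (Req_dec (pu F1 a0 b0) 0) as [Z|NZ]; [|apply locally_invertible_J11; assumption].
  set (G1 := fun x y => F1 y x). set (G2 := fun x y => F2 y x).
  assert (Q1 : partials (sq b0 a0 r) G1).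
  { intros x y [Hx Hy]. destruct (P1 y x (conj Hy Hx)). split; assumption. }
  assert (Q2 : partials (sq b0 a0 r) G2).
  { intros x y [Hx Hy]. destruct (P2 y x (conj Hy Hx)). split; assumption. }
  unfold jdet in Hdet.
  destruct (locally_invertible_J11 G1 G2 b0 a0 r Hr Q1 Q2
     (continuity_2d_pt_swap _ _ _ C12) (continuity_2d_pt_swap _ _ _ C11)
     (continuity_2d_pt_swap _ _ _ C22) (continuity_2d_pt_swap _ _ _ C21))
    as [rho [sig [L [H1 [H2 [H3 [H4 [H5 H6]]]]]]]].
  - change (pv F1 a0 b0 <> 0). intro Z'. apply Hdet. rewrite Z, Z'. ring.
  - unfold jdet. change (pv F1 a0 b0 * pu F2 a0 b0 - pu F1 a0 b0 * pv F2 a0 b0 <> 0).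
    intro Z'. apply Hdet. lra.
  - exists rho, sig, L. do 4 (split; [assumption|]). split.
    + intros a b a' b' [Ha Hb] [Ha' Hb'].
      destruct (H5 b a b' a' (conj Hb Ha) (conj Hb' Ha')). split; assumption.
    + intros y1 y2 Hy. destruct (H6 y1 y2 Hy) as [x [y [[Hx Hy'] [E1 E2]]]].
      exists y, x. repeat split; assumption.
Qed.

(* If [h e ~ J w] up to [eps' |w|], then [w ~ h J^-1 e]; this yields the derivatives
   of the inverse map in the direction [e]. *)
Section LinearizedInverse.

Variables (J11 J12 J21 J22 e1 e2 : R).
Hypotheses (det_neq0 : J11 * J22 - J12 * J21 <> 0) (e1_le1 : Rabs e1 <= 1) (e2_le1 : Rabs e2 <= 1).

Let d := J11 * J22 - J12 * J21.
Let K := mx_size J11 J12 J21 J22.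
Let Dt := Rabs d.

Let entries_le_K : Rabs J11 <= K /\ Rabs J12 <= K /\ Rabs J21 <= K /\ Rabs J22 <= K.
Proof.
  unfold K, mx_size. assert (H1 := Rabs_pos J11); assert (H2 := Rabs_pos J12);
  assert (H3 := Rabs_pos J21); assert (H4 := Rabs_pos J22). repeat split; lra.
Qed.

Lemma linearized_inverse_size (w1 w2 h eps' : R) :
  0 <= eps' -> 4 * K / Dt * eps' <= 1 / 2 ->
  Rabs (h * e1 - (J11 * w1 + J12 * w2)) <= eps' * Rmax (Rabs w1) (Rabs w2) ->
  Rabs (h * e2 - (J21 * w1 + J22 * w2)) <= eps' * Rmax (Rabs w1) (Rabs w2) ->
  Rmax (Rabs w1) (Rabs w2) <= 8 * K / Dt * Rabs h.
Proof.
  intros He' Hs Hr1 Hr2.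
  assert (HK : 1 <= K) by apply mx_size_ge1.
  assert (HD : 0 < Dt) by (apply Rabs_pos_lt; exact det_neq0).
  destruct entries_le_K as [K1 [K2 [K3 K4]]].
  set (M := Rmax (Rabs w1) (Rabs w2)) in *.
  set (r1 := h * e1 - (J11 * w1 + J12 * w2)) in *.
  set (r2 := h * e2 - (J21 * w1 + J22 * w2)) in *.
  assert (Hh := Rabs_pos h).
  assert (Bd : forall e r, Rabs e <= 1 -> Rabs r <= eps' * M -> Rabs (h * e - r) <= Rabs h + eps' * M).
  { intros e r He Hr. unfold Rminus. eapply Rle_trans; [apply Rabs_triang|].
    rewrite Rabs_Ropp, Rabs_mult. assert (Rabs h * Rabs e <= Rabs h * 1)
      by (apply Rmult_le_compat_l; lra). lra. }
  assert (Sb := solve_2x2_bound J11 J12 J21 J22 w1 w2 (h * e1 - r1) (h * e2 - r2) Dt K HD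
     ltac:(lra) ltac:(fold d Dt; lra) K1 K2 K3 K4 ltac:(unfold r1; ring) ltac:(unfold r2; ring)).
  assert (Rm : Rmax (Rabs (h * e1 - r1)) (Rabs (h * e2 - r2)) <= Rabs h + eps' * M)
    by (apply Rmax_lub; apply Bd; assumption).
  assert (HLp : 0 <= 4 * K / Dt) by (apply Rlt_le, Rdiv_lt_0_compat; lra).
  assert (BM : M <= 4 * K / Dt * (Rabs h + eps' * M)).
  { unfold M at 1. apply Rmax_lub.
    - eapply Rle_trans; [apply (proj1 Sb)|]. apply Rmult_le_compat_l; assumption.
    - eapply Rle_trans; [apply (proj2 Sb)|]. apply Rmult_le_compat_l; assumption. }
  assert (HM0 : 0 <= M) by (unfold M; eapply Rle_trans; [apply Rabs_pos|apply Rmax_l]).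
  replace (8 * K / Dt * Rabs h) with (2 * (4 * K / Dt * Rabs h)) by (field; lra).
  assert ((4 * K / Dt * eps') * M <= 1/2 * M) by (apply Rmult_le_compat_r; lra).
  lra.
Qed.

Lemma linearized_inverse_error (w1 w2 h eps' : R) :
  0 <= eps' -> 4 * K / Dt * eps' <= 1 / 2 ->
  Rabs (h * e1 - (J11 * w1 + J12 * w2)) <= eps' * Rmax (Rabs w1) (Rabs w2) ->
  Rabs (h * e2 - (J21 * w1 + J22 * w2)) <= eps' * Rmax (Rabs w1) (Rabs w2) ->
  Rabs (w1 * d - (J22 * e1 - J12 * e2) * h) <= 16 * K * K * eps' / Dt * Rabs h /\
  Rabs (w2 * d - (J11 * e2 - J21 * e1) * h) <= 16 * K * K * eps' / Dt * Rabs h.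
Proof.
  intros He' Hs Hr1 Hr2.
  assert (BM := linearized_inverse_size w1 w2 h eps' He' Hs Hr1 Hr2).
  assert (HK : 1 <= K) by apply mx_size_ge1.
  assert (HD : 0 < Dt) by (apply Rabs_pos_lt; exact det_neq0).
  destruct entries_le_K as [K1 [K2 [K3 K4]]].
  set (M := Rmax (Rabs w1) (Rabs w2)) in *.
  set (r1 := h * e1 - (J11 * w1 + J12 * w2)) in *.
  set (r2 := h * e2 - (J21 * w1 + J22 * w2)) in *.
  assert (G : forall p q s t, Rabs p <= K -> Rabs q <= K -> Rabs s <= eps' * M -> Rabs t <= eps' * M ->
     Rabs (- p * s + q * t) <= 16 * K * K * eps' / Dt * Rabs h).
  { intros p q s t Hp Hq Hs' Ht. eapply Rle_trans; [apply Rabs_triang|].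
    rewrite !Rabs_mult, Rabs_Ropp.
    assert (Rabs p * Rabs s <= K * (eps' * M)) by (apply Rmult_le_compat; try apply Rabs_pos; lra).
    assert (Rabs q * Rabs t <= K * (eps' * M)) by (apply Rmult_le_compat; try apply Rabs_pos; lra).
    assert (K * (eps' * M) <= K * (eps' * (8 * K / Dt * Rabs h))).
    { apply Rmult_le_compat_l; [lra|]. apply Rmult_le_compat_l; lra. }
    replace (16 * K * K * eps' / Dt * Rabs h) with (2 * (K * (eps' * (8 * K / Dt * Rabs h))))
      by (field; lra).
    lra. }
  split.
  - replace (w1 * d - (J22 * e1 - J12 * e2) * h) with (- J22 * r1 + J12 * r2)
      by (unfold d, r1, r2; ring).
    apply G; assumption.
  - replace (w2 * d - (J11 * e2 - J21 * e1) * h) with (- J11 * r2 + J21 * r1)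
      by (unfold d, r1, r2; ring).
    apply G; assumption.
Qed.

Lemma linearized_inverse_quotients (W1 W2 : R -> R) :
  (forall eps, 0 < eps -> exists eta, 0 < eta /\ forall h, Rabs h < eta ->
     Rabs (h * e1 - (J11 * W1 h + J12 * W2 h)) <= eps * Rmax (Rabs (W1 h)) (Rabs (W2 h)) /\
     Rabs (h * e2 - (J21 * W1 h + J22 * W2 h)) <= eps * Rmax (Rabs (W1 h)) (Rabs (W2 h))) ->
  forall eps, 0 < eps -> exists eta, 0 < eta /\ forall h, h <> 0 -> Rabs h < eta ->
     Rabs (W1 h / h - (J22 * e1 - J12 * e2) / d) < eps /\
     Rabs (W2 h / h - (J11 * e2 - J21 * e1) / d) < eps.
Proof.
  intros HL eps Heps.
  assert (HK : 1 <= K) by apply mx_size_ge1.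
  assert (HD : 0 < Dt) by (apply Rabs_pos_lt; exact det_neq0).
  set (eps' := Rmin (Dt / (8 * K)) (eps * Dt * Dt / (32 * K * K))).
  assert (E1 := Rmin_l (Dt / (8 * K)) (eps * Dt * Dt / (32 * K * K))).
  assert (E2 := Rmin_r (Dt / (8 * K)) (eps * Dt * Dt / (32 * K * K))). fold eps' in E1, E2.
  assert (Hep : 0 < eps').
  { assert (0 < eps * Dt * Dt) by (apply Rmult_lt_0_compat; [apply Rmult_lt_0_compat|]; lra).
    apply Rmin_glb_lt; apply Rdiv_lt_0_compat; nra. }
  destruct (HL eps' Hep) as [eta [Heta Hh]].
  exists eta; split; [exact Heta|]. intros h Hh0 Hhe.
  destruct (Hh h Hhe) as [R1 R2].
  assert (S1 : 4 * K / Dt * eps' <= 1 / 2).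
  { apply Rle_trans with (4 * K / Dt * (Dt / (8 * K))).
    - apply Rmult_le_compat_l; [apply Rlt_le, Rdiv_lt_0_compat; lra|exact E1].
    - right; field; lra. }
  assert (S2 : 16 * K * K * eps' / Dt <= eps * Dt / 2).
  { apply Rle_trans with (16 * K * K * (eps * Dt * Dt / (32 * K * K)) / Dt).
    - unfold Rdiv. apply Rmult_le_compat_r; [apply Rlt_le, Rinv_0_lt_compat; lra|].
      apply Rmult_le_compat_l; [nra|]. exact E2.
    - right; field; lra. }
  destruct (linearized_inverse_error (W1 h) (W2 h) h eps' (Rlt_le _ _ Hep) S1 R1 R2) as [L1 L2].
  assert (Hha : 0 < Rabs h) by (apply Rabs_pos_lt; exact Hh0).
  assert (G : forall w num, Rabs (w * d - num * h) <= 16 * K * K * eps' / Dt * Rabs h ->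
            Rabs (w / h - num / d) < eps).
  { intros w num Hw.
    replace (w / h - num / d) with ((w * d - num * h) / (d * h)) by (field; split; assumption).
    unfold Rdiv. rewrite Rabs_mult, Rabs_inv, Rabs_mult. fold Dt.
    apply Rle_lt_trans with ((eps * Dt / 2 * Rabs h) * / (Dt * Rabs h)).
    - apply Rmult_le_compat_r; [apply Rlt_le, Rinv_0_lt_compat; nra|].
      eapply Rle_trans; [exact Hw|]. apply Rmult_le_compat_r; lra.
    - replace (eps * Dt / 2 * Rabs h * / (Dt * Rabs h)) with (eps / 2) by (field; lra). lra. }
  split; apply G; assumption.
Qed.

End LinearizedInverse.

Lemma inverse_difference_quotients (F1 F2 : R -> R -> R) (z1 z2 J11 J12 J21 J22 e1 e2 : R)
  (W1 W2 : R -> R) :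
  differentiable_pt_lim F1 z1 z2 J11 J12 -> differentiable_pt_lim F2 z1 z2 J21 J22 ->
  J11 * J22 - J12 * J21 <> 0 -> Rabs e1 <= 1 -> Rabs e2 <= 1 ->
  (forall d, 0 < d -> exists eta, 0 < eta /\ forall h, Rabs h < eta ->
     Rabs (W1 h) < d /\ Rabs (W2 h) < d /\
     F1 (z1 + W1 h) (z2 + W2 h) - F1 z1 z2 = h * e1 /\
     F2 (z1 + W1 h) (z2 + W2 h) - F2 z1 z2 = h * e2) ->
  forall eps, 0 < eps -> exists eta, 0 < eta /\ forall h, h <> 0 -> Rabs h < eta ->
     Rabs (W1 h / h - (J22 * e1 - J12 * e2) / (J11 * J22 - J12 * J21)) < eps /\
     Rabs (W2 h / h - (J11 * e2 - J21 * e1) / (J11 * J22 - J12 * J21)) < eps.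
Proof.
  intros D1 D2 Hd He1 He2 HW.
  apply linearized_inverse_quotients; auto.
  intros eps Heps.
  destruct (D1 (mkposreal eps Heps)) as [d1 Hd1].
  destruct (D2 (mkposreal eps Heps)) as [d2 Hd2].
  assert (Hm : 0 < Rmin d1 d2) by (apply Rmin_glb_lt; apply cond_pos).
  destruct (HW _ Hm) as [eta [Heta Hh]].
  exists eta; split; [exact Heta|]. intros h Hhe.
  destruct (Hh h Hhe) as [A1 [A2 [E1 E2]]].
  assert (M1 := Rmin_l d1 d2); assert (M2 := Rmin_r d1 d2).
  assert (U : Rabs (z1 + W1 h - z1) < Rmin d1 d2) by (replace (z1 + W1 h - z1) with (W1 h) by ring; lra).
  assert (V : Rabs (z2 + W2 h - z2) < Rmin d1 d2) by (replace (z2 + W2 h - z2) with (W2 h) by ring; lra).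
  specialize (Hd1 (z1 + W1 h) (z2 + W2 h) ltac:(lra) ltac:(lra)).
  specialize (Hd2 (z1 + W1 h) (z2 + W2 h) ltac:(lra) ltac:(lra)).
  simpl in Hd1, Hd2.
  replace (z1 + W1 h - z1) with (W1 h) in Hd1, Hd2 by ring.
  replace (z2 + W2 h - z2) with (W2 h) in Hd1, Hd2 by ring.
  rewrite E1 in Hd1. rewrite E2 in Hd2. split; assumption.
Qed.

Section LocalInverse.

Variables (F1 F2 : R -> R -> R) (a0 b0 rho sig L : R).
Hypothesis L_ge0 : 0 <= L.
Hypothesis inverse_lipschitz : forall a b a' b', sq a0 b0 rho a b -> sq a0 b0 rho a' b' ->
  Rabs (a' - a) <= L * Rmax (Rabs (F1 a' b' - F1 a b)) (Rabs (F2 a' b' - F2 a b)) /\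
  Rabs (b' - b) <= L * Rmax (Rabs (F1 a' b' - F1 a b)) (Rabs (F2 a' b' - F2 a b)).
Hypothesis onto : forall y1 y2, sq (F1 a0 b0) (F2 a0 b0) sig y1 y2 ->
  exists a b, sq a0 b0 rho a b /\ F1 a b = y1 /\ F2 a b = y2.

Let V := sq (F1 a0 b0) (F2 a0 b0) sig.

Definition local_inverse (y1 y2 : R) : R * R :=
  epsilon (inhabits (0, 0)) (fun z : R * R =>
    sq a0 b0 rho (fst z) (snd z) /\ F1 (fst z) (snd z) = y1 /\ F2 (fst z) (snd z) = y2).

Definition inv1 (y1 y2 : R) : R := fst (local_inverse y1 y2).
Definition inv2 (y1 y2 : R) : R := snd (local_inverse y1 y2).

Lemma local_inverse_spec (y1 y2 : R) : V y1 y2 ->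
  sq a0 b0 rho (inv1 y1 y2) (inv2 y1 y2) /\
  F1 (inv1 y1 y2) (inv2 y1 y2) = y1 /\ F2 (inv1 y1 y2) (inv2 y1 y2) = y2.
Proof.
  intros Hy. unfold inv1, inv2, local_inverse. apply epsilon_spec.
  destruct (onto y1 y2 Hy) as [a [b Hab]]. exists (a, b). exact Hab.
Qed.

Lemma local_injective (a b a' b' : R) : sq a0 b0 rho a b -> sq a0 b0 rho a' b' ->
  F1 a b = F1 a' b' -> F2 a b = F2 a' b' -> a = a' /\ b = b'.
Proof.
  intros S S' E1 E2. destruct (inverse_lipschitz _ _ _ _ S S') as [L1 L2].
  rewrite E1, E2, !Rminus_diag, Rabs_R0, Rmax_left, Rmult_0_r in L1, L2 by lra.
  split; apply Rminus_diag_uniq_sym, Rabs_eq_0, Rle_antisym; auto; apply Rabs_pos.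
Qed.

Lemma local_inverse_lipschitz (y1 y2 y1' y2' : R) : V y1 y2 -> V y1' y2' ->
  Rabs (inv1 y1' y2' - inv1 y1 y2) <= L * Rmax (Rabs (y1' - y1)) (Rabs (y2' - y2)) /\
  Rabs (inv2 y1' y2' - inv2 y1 y2) <= L * Rmax (Rabs (y1' - y1)) (Rabs (y2' - y2)).
Proof.
  intros Hy Hy'.
  destruct (local_inverse_spec y1 y2 Hy) as [S [E1 E2]].
  destruct (local_inverse_spec y1' y2' Hy') as [S' [E1' E2']].
  destruct (inverse_lipschitz _ _ _ _ S S') as [L1 L2].
  rewrite E1, E2, E1', E2' in L1, L2. split; assumption.
Qed.

Lemma local_inverse_near (y1 y2 : R) : V y1 y2 ->
  forall d, 0 < d -> exists eta, 0 < eta /\ forall u v, Rabs (u - y1) < eta -> Rabs (v - y2) < eta ->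
    V u v /\ Rabs (inv1 u v - inv1 y1 y2) < d /\ Rabs (inv2 u v - inv2 y1 y2) < d.
Proof.
  intros Hy d Hd.
  destruct (locally_2d_sq _ _ _ (sq_locally_2d _ _ _ _ _ Hy)) as [d0 [Hd0 Hin]].
  exists (Rmin d0 (d / (L + 1))). split; [apply Rmin_glb_lt; [lra|apply Rdiv_lt_0_compat; lra]|].
  intros u v H1 H2.
  assert (M1 := Rmin_l d0 (d / (L + 1))); assert (M2 := Rmin_r d0 (d / (L + 1))).
  assert (Huv : V u v) by (apply Hin; split; lra).
  split; [exact Huv|].
  destruct (local_inverse_lipschitz y1 y2 u v Hy Huv) as [L1 L2].
  set (M := Rmax (Rabs (u - y1)) (Rabs (v - y2))) in *.
  assert (Hm : M < d / (L + 1)) by (apply Rmax_lub_lt; lra).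
  assert (Hm0 : 0 <= M) by (eapply Rle_trans; [apply Rabs_pos|apply Rmax_l]).
  assert (L * M < d).
  { apply Rle_lt_trans with ((L + 1) * M); [nra|].
    apply Rmult_lt_reg_r with (/ (L + 1)); [apply Rinv_0_lt_compat; lra|].
    replace ((L + 1) * M * / (L + 1)) with M by (field; lra). exact Hm. }
  split; lra.
Qed.

Lemma local_inverse_continuity (y1 y2 : R) : V y1 y2 ->
  continuity_2d_pt inv1 y1 y2 /\ continuity_2d_pt inv2 y1 y2.
Proof.
  intros Hy. split; intros eps;
    destruct (local_inverse_near y1 y2 Hy eps (cond_pos eps)) as [eta [Heta Hc]];
    exists (mkposreal eta Heta); intros u v Hu Hv; apply (Hc u v Hu Hv).
Qed.

Section Derivatives.

Variables y1 y2 : R.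
Hypothesis y_in : V y1 y2.
Let z1 := inv1 y1 y2.
Let z2 := inv2 y1 y2.
Hypothesis F1_diff : differentiable_pt_lim F1 z1 z2 (pu F1 z1 z2) (pv F1 z1 z2).
Hypothesis F2_diff : differentiable_pt_lim F2 z1 z2 (pu F2 z1 z2) (pv F2 z1 z2).
Hypothesis jdet_neq0 : jdet F1 F2 z1 z2 <> 0.

Lemma local_inverse_quotients (e1 e2 : R) : Rabs e1 <= 1 -> Rabs e2 <= 1 ->
  forall eps, 0 < eps -> exists eta, 0 < eta /\ forall h, h <> 0 -> Rabs h < eta ->
  Rabs ((inv1 (y1 + h * e1) (y2 + h * e2) - z1) / h
        - (pv F2 z1 z2 * e1 - pv F1 z1 z2 * e2) / jdet F1 F2 z1 z2) < eps /\
  Rabs ((inv2 (y1 + h * e1) (y2 + h * e2) - z2) / h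
        - (pu F1 z1 z2 * e2 - pu F2 z1 z2 * e1) / jdet F1 F2 z1 z2) < eps.
Proof.
  intros He1 He2.
  destruct (local_inverse_spec y1 y2 y_in) as [_ [E1 E2]]. fold z1 z2 in E1, E2.
  apply (inverse_difference_quotients F1 F2 z1 z2 _ _ _ _ e1 e2
           (fun h => inv1 (y1 + h * e1) (y2 + h * e2) - z1)
           (fun h => inv2 (y1 + h * e1) (y2 + h * e2) - z2) F1_diff F2_diff jdet_neq0 He1 He2).
  intros d Hd. destruct (local_inverse_near y1 y2 y_in d Hd) as [eta [Heta Hc]].
  exists eta; split; [exact Heta|]. intros h Hh.
  assert (Q1 : Rabs (y1 + h * e1 - y1) < eta).
  { replace (y1 + h * e1 - y1) with (h * e1) by ring. rewrite Rabs_mult.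
    assert (Hp := Rabs_pos h). apply Rle_lt_trans with (Rabs h * 1); [|lra].
    apply Rmult_le_compat_l; assumption. }
  assert (Q2 : Rabs (y2 + h * e2 - y2) < eta).
  { replace (y2 + h * e2 - y2) with (h * e2) by ring. rewrite Rabs_mult.
    assert (Hp := Rabs_pos h). apply Rle_lt_trans with (Rabs h * 1); [|lra].
    apply Rmult_le_compat_l; assumption. }
  destruct (Hc _ _ Q1 Q2) as [Hy' [B1 B2]].
  destruct (local_inverse_spec _ _ Hy') as [_ [G1 G2]].
  replace (z1 + (inv1 (y1 + h * e1) (y2 + h * e2) - z1)) with (inv1 (y1 + h * e1) (y2 + h * e2)) by ring.
  replace (z2 + (inv2 (y1 + h * e1) (y2 + h * e2) - z2)) with (inv2 (y1 + h * e1) (y2 + h * e2)) by ring.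
  rewrite G1, G2, E1, E2. repeat split; try assumption; ring.
Qed.

Lemma local_inverse_derive :
  is_derive (fun s => inv1 s y2) y1 (pv F2 z1 z2 / jdet F1 F2 z1 z2) /\
  is_derive (fun s => inv1 y1 s) y2 (- pv F1 z1 z2 / jdet F1 F2 z1 z2) /\
  is_derive (fun s => inv2 s y2) y1 (- pu F2 z1 z2 / jdet F1 F2 z1 z2) /\
  is_derive (fun s => inv2 y1 s) y2 (pu F1 z1 z2 / jdet F1 F2 z1 z2).
Proof.
  assert (H1 : Rabs 1 <= 1) by (rewrite Rabs_R1; lra).
  assert (H0 : Rabs 0 <= 1) by (rewrite Rabs_R0; lra).
  assert (Dir1 := local_inverse_quotients 1 0 H1 H0).
  assert (Dir2 := local_inverse_quotients 0 1 H0 H1).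
  split; [|split; [|split]]; apply is_derive_of_difference_quotient; intros eps Heps.
  - destruct (Dir1 eps Heps) as [eta [He Hh]]. exists eta; split; [exact He|].
    intros h Hh0 Hh1. destruct (Hh h Hh0 Hh1) as [R _].
    rewrite Rmult_1_r, Rmult_0_r, Rplus_0_r in R.
    replace (pv F2 z1 z2 / jdet F1 F2 z1 z2)
      with ((pv F2 z1 z2 * 1 - pv F1 z1 z2 * 0) / jdet F1 F2 z1 z2) by (field; exact jdet_neq0).
    exact R.
  - destruct (Dir2 eps Heps) as [eta [He Hh]]. exists eta; split; [exact He|].
    intros h Hh0 Hh1. destruct (Hh h Hh0 Hh1) as [R _].
    rewrite Rmult_1_r, Rmult_0_r, Rplus_0_r in R.
    replace (- pv F1 z1 z2 / jdet F1 F2 z1 z2)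
      with ((pv F2 z1 z2 * 0 - pv F1 z1 z2 * 1) / jdet F1 F2 z1 z2) by (field; exact jdet_neq0).
    exact R.
  - destruct (Dir1 eps Heps) as [eta [He Hh]]. exists eta; split; [exact He|].
    intros h Hh0 Hh1. destruct (Hh h Hh0 Hh1) as [_ R].
    rewrite Rmult_1_r, Rmult_0_r, Rplus_0_r in R.
    replace (- pu F2 z1 z2 / jdet F1 F2 z1 z2)
      with ((pu F1 z1 z2 * 0 - pu F2 z1 z2 * 1) / jdet F1 F2 z1 z2) by (field; exact jdet_neq0).
    exact R.
  - destruct (Dir2 eps Heps) as [eta [He Hh]]. exists eta; split; [exact He|].
    intros h Hh0 Hh1. destruct (Hh h Hh0 Hh1) as [_ R].
    rewrite Rmult_1_r, Rmult_0_r, Rplus_0_r in R.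
    replace (pu F1 z1 z2 / jdet F1 F2 z1 z2)
      with ((pu F1 z1 z2 * 1 - pu F2 z1 z2 * 0) / jdet F1 F2 z1 z2) by (field; exact jdet_neq0).
    exact R.
Qed.

End Derivatives.
End LocalInverse.

Definition inverse_derivatives (F1 F2 N1 N2 : R -> R -> R) (y1 y2 : R) : Prop :=
  let a := N1 y1 y2 in let b := N2 y1 y2 in
  continuity_2d_pt N1 y1 y2 /\ continuity_2d_pt N2 y1 y2 /\
  is_derive (fun s => N1 s y2) y1 (pv F2 a b / jdet F1 F2 a b) /\
  is_derive (fun s => N1 y1 s) y2 (- pv F1 a b / jdet F1 F2 a b) /\
  is_derive (fun s => N2 s y2) y1 (- pu F2 a b / jdet F1 F2 a b) /\
  is_derive (fun s => N2 y1 s) y2 (pu F1 a b / jdet F1 F2 a b).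

Theorem inverse_function_theorem (F1 F2 : R -> R -> R) (a0 b0 r : R) : 0 < r ->
  Cn 1 (sq a0 b0 r) F1 -> Cn 1 (sq a0 b0 r) F2 -> jdet F1 F2 a0 b0 <> 0 ->
  exists rho sig (N1 N2 : R -> R -> R), 0 < rho /\ rho <= r /\ 0 < sig /\
   (forall a b a' b', sq a0 b0 rho a b -> sq a0 b0 rho a' b' ->
      F1 a b = F1 a' b' -> F2 a b = F2 a' b' -> a = a' /\ b = b') /\
   (forall a b, sq a0 b0 rho a b -> jdet F1 F2 a b <> 0) /\
   (forall y1 y2, sq (F1 a0 b0) (F2 a0 b0) sig y1 y2 ->
      sq a0 b0 rho (N1 y1 y2) (N2 y1 y2) /\
      F1 (N1 y1 y2) (N2 y1 y2) = y1 /\ F2 (N1 y1 y2) (N2 y1 y2) = y2 /\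
      inverse_derivatives F1 F2 N1 N2 y1 y2).
Proof.
  intros Hr HF1 HF2 Hdet.
  set (S := sq a0 b0 r). assert (HS : open2 S) by apply open2_sq.
  assert (Sp : S a0 b0) by (apply sq_center; exact Hr).
  assert (C1 : forall F, Cn 1 S F -> forall a b, S a b ->
     continuity_2d_pt (pu F) a b /\ continuity_2d_pt (pv F) a b).
  { intros F HF a b Hab. split; [exact (Cn_continuity S 0 _ (Cn_pu S 0 _ HF) a b Hab)
                                |exact (Cn_continuity S 0 _ (Cn_pv S 0 _ HF) a b Hab)]. }
  destruct (C1 F1 HF1 a0 b0 Sp) as [C11 C12]. destruct (C1 F2 HF2 a0 b0 Sp) as [C21 C22].
  assert (Cdet : continuity_2d_pt (jdet F1 F2) a0 b0).
  { unfold jdet. apply continuity_2d_pt_minus; apply continuity_2d_pt_mult; assumption. }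
  destruct (locally_2d_sq _ _ _ (continuity_2d_pt_neq_0 _ _ _ Cdet Hdet)) as [r1 [Hr1 Hnz]].
  set (r' := Rmin r r1). assert (Hr'1 := Rmin_l r r1). assert (Hr'2 := Rmin_r r r1).
  fold r' in Hr'1, Hr'2.
  assert (Hr' : 0 < r') by (unfold r'; apply Rmin_glb_lt; assumption).
  assert (Hsub : forall a b, sq a0 b0 r' a b -> S a b) by (intros; eapply sq_le; [|eauto]; lra).
  assert (P1 : partials (sq a0 b0 r') F1) by (intros a b Hab; apply (Cn_partials S 0 _ HF1), Hsub, Hab).
  assert (P2 : partials (sq a0 b0 r') F2) by (intros a b Hab; apply (Cn_partials S 0 _ HF2), Hsub, Hab).
  destruct (locally_invertible_of_jdet F1 F2 a0 b0 r' Hr' P1 P2 C11 C12 C21 C22 Hdet)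
    as [rho [sig [L [Hrho [Hrr [Hsig [HL [Lip Ex]]]]]]]].
  assert (Hrho_r : forall a b, sq a0 b0 rho a b -> S a b) by (intros; apply Hsub; eapply sq_le; eauto).
  exists rho, sig, (inv1 F1 F2 a0 b0 rho), (inv2 F1 F2 a0 b0 rho).
  do 3 (split; [lra|]).
  split; [exact (local_injective F1 F2 a0 b0 rho L Lip)|].
  split; [intros a b Hab; apply Hnz; destruct Hab; split; lra|].
  intros y1 y2 Hy.
  destruct (local_inverse_spec F1 F2 a0 b0 rho sig Ex y1 y2 Hy) as [Sz [E1 E2]].
  assert (Dz : forall F, Cn 1 S F -> differentiable_pt_lim F
      (inv1 F1 F2 a0 b0 rho y1 y2) (inv2 F1 F2 a0 b0 rho y1 y2)
      (pu F (inv1 F1 F2 a0 b0 rho y1 y2) (inv2 F1 F2 a0 b0 rho y1 y2))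
      (pv F (inv1 F1 F2 a0 b0 rho y1 y2) (inv2 F1 F2 a0 b0 rho y1 y2))).
  { intros F HF. apply (partials_differentiable S HS F (Cn_partials S 0 _ HF)); [|apply Hrho_r, Sz].
    intros a b Hab; exact (proj1 (C1 F HF a b Hab)). }
  assert (Jz : jdet F1 F2 (inv1 F1 F2 a0 b0 rho y1 y2) (inv2 F1 F2 a0 b0 rho y1 y2) <> 0)
    by (apply Hnz; destruct Sz; split; lra).
  destruct (local_inverse_continuity F1 F2 a0 b0 rho sig L HL Lip Ex y1 y2 Hy) as [N1c N2c].
  destruct (local_inverse_derive F1 F2 a0 b0 rho sig L HL Lip Ex y1 y2 Hy
              (Dz F1 HF1) (Dz F2 HF2) Jz) as [D1 [D2 [D3 D4]]].
  split; [exact Sz|split; [exact E1|split; [exact E2|]]].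
  exact (conj N1c (conj N2c (conj D1 (conj D2 (conj D3 D4))))).
Qed.

Lemma smooth_on_jdet (D : R -> R -> Prop) (F1 F2 : R -> R -> R) :
  open2 D -> smooth_on D F1 -> smooth_on D F2 -> smooth_on D (jdet F1 F2).
Proof.
  intros HD H1 H2.
  exact (smooth_on_minus D HD _ _
    (smooth_on_mult D HD _ _ (smooth_on_pu D F1 H1) (smooth_on_pv D F2 H2))
    (smooth_on_mult D HD _ _ (smooth_on_pv D F1 H1) (smooth_on_pu D F2 H2))).
Qed.

Section InverseSmoothness.

Variables (F1 F2 N1 N2 : R -> R -> R) (E V : R -> R -> Prop).
Hypotheses (E_open : open2 E) (V_open : open2 V).
Hypotheses (F1_smooth : smooth_on E F1) (F2_smooth : smooth_on E F2).
Hypothesis N_inverse : forall a b, V a b -> E (N1 a b) (N2 a b) /\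
  jdet F1 F2 (N1 a b) (N2 a b) <> 0 /\ inverse_derivatives F1 F2 N1 N2 a b.

Let JN (g : R -> R -> R) (a b : R) : R := g (N1 a b) (N2 a b) / jdet F1 F2 (N1 a b) (N2 a b).

Lemma Cn_JN (n : nat) (g : R -> R -> R) : smooth_on E g ->
  Cn n V N1 -> Cn n V N2 -> Cn n V (JN g) /\ Cn n V (fun a b => - JN g a b).
Proof.
  intros Hg C1 C2.
  assert (Comp : forall k, smooth_on E k -> Cn n V (fun a b => k (N1 a b) (N2 a b))).
  { intros k Hk. apply (Cn_comp V E V_open E_open); auto.
    - apply smooth_on_Cn, Hk.
    - intros a b Hab; exact (proj1 (N_inverse a b Hab)). }
  assert (Sj := smooth_on_jdet E F1 F2 E_open F1_smooth F2_smooth).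
  assert (HJ : Cn n V (JN g)).
  { apply (Cn_div V V_open n (fun a b => g (N1 a b) (N2 a b))
                             (fun a b => jdet F1 F2 (N1 a b) (N2 a b))); auto.
    intros a b Hab; exact (proj1 (proj2 (N_inverse a b Hab))). }
  split; [exact HJ|apply Cn_opp; auto].
Qed.

Lemma inverse_smooth : smooth_on V N1 /\ smooth_on V N2.
Proof.
  rewrite !smooth_on_Cn.
  assert (G : forall n, Cn n V N1 /\ Cn n V N2).
  { induction n as [|n [IH1 IH2]].
    - split; apply Cn_0; intros a b Hab;
        destruct (N_inverse a b Hab) as [_ [_ [C1 [C2 _]]]]; assumption.
    - destruct (Cn_JN n (pv F2) (smooth_on_pv _ _ F2_smooth) IH1 IH2) as [A _].
      destruct (Cn_JN n (pv F1) (smooth_on_pv _ _ F1_smooth) IH1 IH2) as [_ B].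
      destruct (Cn_JN n (pu F2) (smooth_on_pu _ _ F2_smooth) IH1 IH2) as [_ C].
      destruct (Cn_JN n (pu F1) (smooth_on_pu _ _ F1_smooth) IH1 IH2) as [Dd _].
      split; apply (Cn_S V V_open).
      + intros a b Hab; destruct (N_inverse a b Hab) as [_ [_ [_ [_ [D1 [D2 _]]]]]].
        split; eexists; eassumption.
      + apply (Cn_ext V V_open) with (JN (pv F2)); [|exact A].
        intros a b Hab; destruct (N_inverse a b Hab) as [_ [_ [_ [_ [D1 _]]]]].
        symmetry; apply is_derive_unique, D1.
      + apply (Cn_ext V V_open) with (fun a b => - JN (pv F1) a b); [|exact B].
        intros a b Hab; destruct (N_inverse a b Hab) as [_ [_ [_ [_ [_ [D2 _]]]]]].
        symmetry. unfold JN. rewrite <- Rdiv_opp_l. apply is_derive_unique, D2.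
      + intros a b Hab; destruct (N_inverse a b Hab) as [_ [_ [_ [_ [_ [_ [D3 D4]]]]]]].
        split; eexists; eassumption.
      + apply (Cn_ext V V_open) with (fun a b => - JN (pu F2) a b); [|exact C].
        intros a b Hab; destruct (N_inverse a b Hab) as [_ [_ [_ [_ [_ [_ [D3 _]]]]]]].
        symmetry. unfold JN. rewrite <- Rdiv_opp_l. apply is_derive_unique, D3.
      + apply (Cn_ext V V_open) with (JN (pu F1)); [|exact Dd].
        intros a b Hab; destruct (N_inverse a b Hab) as [_ [_ [_ [_ [_ [_ [_ D4]]]]]]].
        symmetry; apply is_derive_unique, D4. }
  split; intro n; apply (G n).
Qed.

End InverseSmoothness.

(** * The Poincare lemma *)

Section Poincare.

Variables (c1 c2 rho : R) (p q : R -> R -> R).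
Hypotheses (p_C1 : Cn 1 (sq c1 c2 rho) p) (q_C1 : Cn 1 (sq c1 c2 rho) q).
Hypothesis closed : forall a b, sq c1 c2 rho a b -> pv p a b = pu q a b.

Let S := sq c1 c2 rho.

(* Integrate [p du + q dv] along the path (c1, c2) -> (c1, b) -> (a, b). *)
Definition primitive (a b : R) : R :=
  RInt (fun s => p s b) c1 a + RInt (fun s => q c1 s) c2 b.

Lemma ex_RInt_hsegment (a b : R) : S a b -> ex_RInt (fun s => p s b) c1 a.
Proof.
  intros Hab. apply (@ex_RInt_continuous R_CompleteNormedModule). intros s Hs.
  apply continuity_2d_pt_continuous_l, (Cn_continuity S 1 _ p_C1), (sq_hsegment c1 c2 rho a b s Hab Hs).
Qed.

Lemma ex_RInt_vsegment (a b : R) : S a b -> ex_RInt (fun s => q c1 s) c2 b.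
Proof.
  intros Hab. apply (@ex_RInt_continuous R_CompleteNormedModule). intros s Hs.
  apply continuity_2d_pt_continuous_r, (Cn_continuity S 1 _ q_C1), (sq_vsegment c1 c2 rho a b s Hab Hs).
Qed.

Lemma primitive_pu (a b : R) : S a b -> is_derive (fun a' => primitive a' b) a (p a b).
Proof.
  intros Hab. unfold primitive. replace (p a b) with (p a b + 0) by ring.
  apply (is_derive_plus (fun a' => RInt (fun s => p s b) c1 a') (fun _ => RInt (fun s => q c1 s) c2 b)).
  - apply (is_derive_RInt (fun s => p s b) (fun a' => RInt (fun s => p s b) c1 a') c1 a).
    + destruct (sq_locally_2d _ _ _ _ _ Hab) as [e He]. exists e. intros y Hy.
      apply (@RInt_correct R_CompleteNormedModule), (ex_RInt_hsegment y b).
      apply He; [exact Hy|rewrite Rminus_diag, Rabs_R0; apply cond_pos].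
    + apply continuity_2d_pt_continuous_l, (Cn_continuity S 1 _ p_C1), Hab.
  - exact (is_derive_const (RInt (fun s => q c1 s) c2 b) a).
Qed.

(* Differentiating under the integral sign, and then [pv p = pu q]. *)
Lemma primitive_pv (a b : R) : S a b -> is_derive (fun b' => primitive a b') b (q a b).
Proof.
  intros Hab. unfold primitive.
  destruct (sq_locally_2d _ _ _ _ _ Hab) as [e He].
  assert (Hy : forall y, Rabs (y - b) < e -> S a y)
    by (intros y Hy; apply He; [rewrite Rminus_diag, Rabs_R0; apply cond_pos|exact Hy]).
  assert (Pp := Cn_partials S 0 _ p_C1). assert (Pq := Cn_partials S 0 _ q_C1).
  replace (q a b) with ((q a b - q c1 b) + q c1 b) by ring.
  apply (is_derive_plus (fun b' => RInt (fun s => p s b') c1 a) (fun b' => RInt (fun s => q c1 s) c2 b')).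
  - assert (E : RInt (fun t => Derive (fun u => p t u) b) c1 a = q a b - q c1 b).
    { rewrite (RInt_ext _ (fun t => pu q t b)).
      - apply (RInt_Derive (fun s => q s b) c1 a).
        + intros s Hs. exact (proj1 (Pq s b (sq_hsegment c1 c2 rho a b s Hab Hs))).
        + intros s Hs. apply (continuity_2d_pt_continuous_l (pu q)).
          apply (Cn_continuity S 0 _ (Cn_pu S 0 _ q_C1)), (sq_hsegment c1 c2 rho a b s Hab Hs).
      - intros s Hs. apply closed, (sq_hsegment c1 c2 rho a b); [exact Hab|lra]. }
    rewrite <- E. apply (is_derive_RInt_param (fun b' s => p s b') c1 a b).
    + exists e. intros y Hy' t Ht.
      exact (proj2 (Pp t y (sq_hsegment c1 c2 rho a y t (Hy y Hy') Ht))).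
    + intros t Ht. apply (continuity_2d_pt_swap (pv p)).
      apply (Cn_continuity S 0 _ (Cn_pv S 0 _ p_C1)), (sq_hsegment c1 c2 rho a b t Hab Ht).
    + exists e. intros y Hy'. exact (ex_RInt_hsegment a y (Hy y Hy')).
  - apply (is_derive_RInt (fun s => q c1 s) (fun b' => RInt (fun s => q c1 s) c2 b') c2 b).
    + exists e. intros y Hy'. apply (@RInt_correct R_CompleteNormedModule), (ex_RInt_vsegment a y), Hy, Hy'.
    + apply continuity_2d_pt_continuous_r, (Cn_continuity S 1 _ q_C1).
      destruct Hab as [Ha Hb]. pose proof (Rabs_pos (a - c1)).
      split; [rewrite Rminus_diag, Rabs_R0; lra|exact Hb].
Qed.

Lemma primitive_partials (a b : R) : S a b -> pu primitive a b = p a b /\ pv primitive a b = q a b.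
Proof. intros Hab. split; apply is_derive_unique; [apply primitive_pu|apply primitive_pv]; exact Hab. Qed.

End Poincare.

Lemma Poincare_lemma (c1 c2 rho : R) (p q : R -> R -> R) :
  smooth_on (sq c1 c2 rho) p -> smooth_on (sq c1 c2 rho) q ->
  (forall a b, sq c1 c2 rho a b -> pv p a b = pu q a b) ->
  exists P, smooth_on (sq c1 c2 rho) P /\
    forall a b, sq c1 c2 rho a b -> pu P a b = p a b /\ pv P a b = q a b.
Proof.
  rewrite !smooth_on_Cn. intros Hp Hq Hcl.
  set (U := sq c1 c2 rho). assert (HU : open2 U) by apply open2_sq.
  set (P := primitive c1 c2 p q).
  assert (EP := primitive_partials c1 c2 rho p q (Hp 1%nat) (Hq 1%nat) Hcl).
  exists P. split; [|exact EP].
  assert (G : forall n, Cn (S n) U P).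
  { intros n. apply (Cn_S U HU).
    - intros a b Hab. split;
        [exists (p a b); apply (primitive_pu c1 c2 rho p q (Hp 1%nat))
        |exists (q a b); apply (primitive_pv c1 c2 rho p q (Hp 1%nat) (Hq 1%nat) Hcl)]; exact Hab.
    - apply (Cn_ext U HU) with p; [|apply Hp]. intros a b Hab; symmetry; apply (EP a b Hab).
    - apply (Cn_ext U HU) with q; [|apply Hq]. intros a b Hab; symmetry; apply (EP a b Hab). }
  apply smooth_on_Cn. intros n. apply (Cn_le U n (S n)); [lia|apply G].
Qed.

Section ThirdOrder.

Variables (S : R -> R -> Prop) (g : R -> R -> R).
Hypotheses (S_open : open2 S) (g_smooth : smooth_on S g).

Lemma pu_pv_pu (a b : R) : S a b -> pu (pv (pu g)) a b = pu (pu (pv g)) a b.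
Proof.
  intros Hab. apply (pu_ext_on S S_open); [|exact Hab].
  intros x y Hxy. symmetry. apply (smooth_on_pu_pv S S_open g g_smooth x y Hxy).
Qed.

Lemma pv_pv_pu (a b : R) : S a b -> pv (pv (pu g)) a b = pu (pv (pv g)) a b.
Proof.
  intros Hab. rewrite (pv_ext_on S S_open (pv (pu g)) (pu (pv g))); [| |exact Hab].
  - symmetry. apply (smooth_on_pu_pv S S_open (pv g) (smooth_on_pv S g g_smooth) a b Hab).
  - intros x y Hxy. symmetry. apply (smooth_on_pu_pv S S_open g g_smooth x y Hxy).
Qed.

Lemma pu_pv_pu_pu (a b : R) : S a b -> pu (pv (pu g)) a b = pv (pu (pu g)) a b.
Proof. intros Hab. apply (smooth_on_pu_pv S S_open (pu g) (smooth_on_pu S g g_smooth) a b Hab). Qed.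

End ThirdOrder.

(** * From a solution of (S) to the potential [f] *)

Lemma jdet_of_solves_S (h u v : R -> R -> R) (x t : R) : solves_S h u v x t ->
  jdet u v x t = pu (pu h) (u x t) (v x t) * (pu u x t) ^ 2 - pv (pv h) (u x t) (v x t) * (pu v x t) ^ 2.
Proof.
  intros [_ [_ [_ [_ [S1 S2]]]]]. unfold jdet.
  change (pv u x t = pv (pu h) (u x t) (v x t) * pu u x t + pv (pv h) (u x t) (v x t) * pu v x t) in S1.
  change (pv v x t = pu (pu h) (u x t) (v x t) * pu u x t + pv (pu h) (u x t) (v x t) * pu v x t) in S2.
  rewrite S1, S2. ring.
Qed.

Lemma hessian_potential (c1 c2 rho : R) (p1 q1 q2 : R -> R -> R) :
  smooth_on (sq c1 c2 rho) p1 -> smooth_on (sq c1 c2 rho) q1 -> smooth_on (sq c1 c2 rho) q2 ->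
  (forall a b, sq c1 c2 rho a b -> pv p1 a b = pu q1 a b) ->
  (forall a b, sq c1 c2 rho a b -> pv q1 a b = pu q2 a b) ->
  exists f, smooth_on (sq c1 c2 rho) f /\ forall a b, sq c1 c2 rho a b ->
    pu (pu f) a b = p1 a b /\ pv (pu f) a b = q1 a b /\ pv (pv f) a b = q2 a b.
Proof.
  intros S1 S2 S3 C1 C2. set (W := sq c1 c2 rho). assert (HW : open2 W) by apply open2_sq.
  destruct (Poincare_lemma c1 c2 rho p1 q1 S1 S2 C1) as [chi [Schi Echi]].
  destruct (Poincare_lemma c1 c2 rho q1 q2 S2 S3 C2) as [phi [Sphi Ephi]].
  destruct (Poincare_lemma c1 c2 rho chi phi Schi Sphi) as [f [Sf Ef]].
  { intros a b Hab. rewrite (proj2 (Echi a b Hab)). symmetry. apply (Ephi a b Hab). }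
  exists f. split; [exact Sf|]. intros a b Hab.
  rewrite (pu_ext_on W HW (pu f) chi), (pv_ext_on W HW (pu f) chi), (pv_ext_on W HW (pv f) phi);
    try exact Hab; try (intros x y Hxy; apply (Ef x y Hxy)).
  split; [apply (Echi a b Hab)|split; [apply (Echi a b Hab)|apply (Ephi a b Hab)]].
Qed.

Section InverseOfSolution.

Variables (h u v X T : R -> R -> R) (c1 c2 rho : R).
Let W := sq c1 c2 rho.
Let W_open : open2 W := open2_sq c1 c2 rho.
Hypothesis h_smooth : smooth_on W h.
Hypotheses (X_smooth : smooth_on W X) (T_smooth : smooth_on W T).
Hypothesis X_T_inverse : forall a b, W a b ->
  u (X a b) (T a b) = a /\ v (X a b) (T a b) = b /\
  jdet u v (X a b) (T a b) <> 0 /\ inverse_derivatives u v X T a b.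
Hypothesis solves : forall a b, W a b -> solves_S h u v (X a b) (T a b).

Lemma inverse_of_solution_partials (a b : R) : W a b ->
  let J := jdet u v (X a b) (T a b) in
  let ux := pu u (X a b) (T a b) in let vx := pu v (X a b) (T a b) in
  J <> 0 /\
  pu X a b = (pu (pu h) a b * ux + pv (pu h) a b * vx) / J /\
  pv X a b = - (pv (pu h) a b * ux + pv (pv h) a b * vx) / J /\
  pu T a b = - vx / J /\ pv T a b = ux / J.
Proof.
  intros Hab J ux vx.
  destruct (X_T_inverse a b Hab) as [Eu [Ev [HJ [_ [_ [D1 [D2 [D3 D4]]]]]]]].
  destruct (solves a b Hab) as [_ [_ [_ [_ [S1 S2]]]]]. rewrite Eu, Ev in S1, S2.
  change (pv u (X a b) (T a b) = pv (pu h) a b * ux + pv (pv h) a b * vx) in S1.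
  change (pv v (X a b) (T a b) = pu (pu h) a b * ux + pv (pu h) a b * vx) in S2.
  rewrite <- S1, <- S2.
  repeat split; [exact HJ| | | |]; apply is_derive_unique; assumption.
Qed.

(* The second derivatives of [f] read off from the implicit equations, with
   [f_uu = t h_uu] forced by the linear PDE. *)
Definition potential_uu (a b : R) : R := T a b * pu (pu h) a b.
Definition potential_uv (a b : R) : R := X a b + T a b * pv (pu h) a b.
Definition potential_vv (a b : R) : R := T a b * pv (pv h) a b.

Lemma potential_closed_u (a b : R) : W a b -> pv potential_uu a b = pu potential_uv a b.
Proof.
  intros Hab. unfold potential_uu, potential_uv.
  assert (PX := smooth_on_partials W X X_smooth a b Hab).
  assert (PT := smooth_on_partials W T T_smooth a b Hab).
  assert (Phuu := smooth_on_partials W _ (smooth_on_pu _ _ (smooth_on_pu _ _ h_smooth)) a b Hab).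
  assert (Phuv := smooth_on_partials W _ (smooth_on_pv _ _ (smooth_on_pu _ _ h_smooth)) a b Hab).
  rewrite pv_mult by tauto.
  rewrite (pu_plus X (fun a b => T a b * pv (pu h) a b)); [|tauto|].
  2: apply (ex_derive_mult (fun s => T s b) (fun s => pv (pu h) s b)); tauto.
  rewrite pu_mult by tauto.
  rewrite (smooth_on_pu_pv W W_open (pu h) (smooth_on_pu _ _ h_smooth) a b Hab).
  destruct (inverse_of_solution_partials a b Hab) as [HJ [A1 [_ [A3 A4]]]].
  rewrite A1, A3, A4. field. exact HJ.
Qed.

Lemma potential_closed_v (a b : R) : W a b -> pv potential_uv a b = pu potential_vv a b.
Proof.
  intros Hab. unfold potential_uv, potential_vv.
  assert (PX := smooth_on_partials W X X_smooth a b Hab).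
  assert (PT := smooth_on_partials W T T_smooth a b Hab).
  assert (Phvv := smooth_on_partials W _ (smooth_on_pv _ _ (smooth_on_pv _ _ h_smooth)) a b Hab).
  assert (Phuv := smooth_on_partials W _ (smooth_on_pv _ _ (smooth_on_pu _ _ h_smooth)) a b Hab).
  rewrite pu_mult by tauto.
  rewrite (pv_plus X (fun a b => T a b * pv (pu h) a b)); [|tauto|].
  2: apply (ex_derive_mult (fun s => T a s) (fun s => pv (pu h) a s)); tauto.
  rewrite pv_mult by tauto.
  rewrite (pv_pv_pu W h W_open h_smooth a b Hab).
  destruct (inverse_of_solution_partials a b Hab) as [HJ [_ [A2 [A3 A4]]]].
  rewrite A2, A3, A4. field. exact HJ.
Qed.

Lemma potential_of_inverse : exists f, smooth_on W f /\ forall a b, W a b ->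
  lin_pde h f a b /\ pv (pu f) a b = X a b + T a b * pv (pu h) a b /\
  pv (pv f) a b = T a b * pv (pv h) a b.
Proof.
  destruct (hessian_potential c1 c2 rho potential_uu potential_uv potential_vv) as [f [Sf Ef]].
  - apply (smooth_on_mult W W_open); [exact T_smooth|apply smooth_on_pu, smooth_on_pu, h_smooth].
  - apply (smooth_on_plus W W_open); [exact X_smooth|].
    apply (smooth_on_mult W W_open); [exact T_smooth|apply smooth_on_pv, smooth_on_pu, h_smooth].
  - apply (smooth_on_mult W W_open); [exact T_smooth|apply smooth_on_pv, smooth_on_pv, h_smooth].
  - exact potential_closed_u.
  - exact potential_closed_v.
  - exists f. split; [exact Sf|]. intros a b Hab.
    destruct (Ef a b Hab) as [Fuu [Fuv Fvv]]. unfold lin_pde.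
    rewrite Fuu, Fuv, Fvv. unfold potential_uu, potential_vv. split; [ring|auto].
Qed.

End InverseOfSolution.

Lemma hodograph_potential (D : R -> R -> Prop) (h : R -> R -> R) :
  open2 D -> smooth_on D h ->
  forall (u v : R -> R -> R) (x0 t0 r : R),
     0 < r ->
     smooth_on (sq x0 t0 r) u -> smooth_on (sq x0 t0 r) v ->
     (forall x t, sq x0 t0 r x t ->
        D (u x t) (v x t) /\ solves_S h u v x t /\ nondeg h u v x t) ->
     exists (f : R -> R -> R) (rf : R),
       0 < rf /\
       (forall a b, sq (u x0 t0) (v x0 t0) rf a b -> D a b) /\
       smooth_on (sq (u x0 t0) (v x0 t0) rf) f /\
       (forall a b, sq (u x0 t0) (v x0 t0) rf a b -> lin_pde h f a b) /\
       exists e, 0 < e /\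
         forall x t, sq x0 t0 e x t ->
           sq (u x0 t0) (v x0 t0) rf (u x t) (v x t) /\
           hodo h f x t (u x t) (v x t).
Proof.
  intros HD Hh u v x0 t0 r Hr Hu Hv Hsys.
  set (U := sq x0 t0 r).
  assert (Up : U x0 t0) by (apply sq_center; exact Hr).
  destruct (Hsys x0 t0 Up) as [Dp [Sp Np]].
  assert (Hj : jdet u v x0 t0 <> 0) by (rewrite (jdet_of_solves_S h u v x0 t0 Sp); exact Np).
  destruct (inverse_function_theorem u v x0 t0 r Hr
              (proj1 (smooth_on_Cn U u) Hu 1%nat) (proj1 (smooth_on_Cn U v) Hv 1%nat) Hj)
    as [rho [sig [X [T [Hrho [Hrr [Hsig [Inj [Jnz Inv]]]]]]]]].
  set (u0 := u x0 t0) in *. set (v0 := v x0 t0) in *.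
  set (E := sq x0 t0 rho).
  assert (HEU : forall a b, E a b -> U a b) by (intros; eapply sq_le; eauto).
  destruct (inverse_smooth u v X T E (sq u0 v0 sig) (open2_sq _ _ _) (open2_sq _ _ _)
              (smooth_on_sub U E u HEU Hu) (smooth_on_sub U E v HEU Hv)) as [SX ST].
  { intros a b Hab. destruct (Inv a b Hab) as [Ein [_ [_ Nd]]]. auto. }
  destruct (HD u0 v0 Dp) as [eD [HeD HsD]].
  set (rf := Rmin sig eD). assert (R1 := Rmin_l sig eD). assert (R2 := Rmin_r sig eD).
  fold rf in R1, R2. assert (Hrf : 0 < rf) by (apply Rmin_glb_lt; assumption).
  set (W := sq u0 v0 rf).
  assert (HWV : forall a b, W a b -> sq u0 v0 sig a b) by (intros; eapply sq_le; eauto).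
  assert (HWD : forall a b, W a b -> D a b) by (intros a b Hab; apply HsD; eapply sq_le; eauto).
  destruct (potential_of_inverse h u v X T u0 v0 rf (smooth_on_sub D W h HWD Hh)
              (smooth_on_sub _ W X HWV SX) (smooth_on_sub _ W T HWV ST)) as [f [Sf Ef]].
  { intros a b Hab. destruct (Inv a b (HWV a b Hab)) as [Ein [E1 [E2 Nd]]]. auto. }
  { intros a b Hab. destruct (Inv a b (HWV a b Hab)) as [Ein _]. apply Hsys, HEU, Ein. }
  exists f, rf. do 3 (split; [assumption|]). split; [intros a b Hab; apply (Ef a b Hab)|].
  destruct (proj2 (proj2 (Hu nil x0 t0 Up)) (mkposreal rf Hrf)) as [d1 Hd1].
  destruct (proj2 (proj2 (Hv nil x0 t0 Up)) (mkposreal rf Hrf)) as [d2 Hd2].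
  exists (Rmin rho (Rmin d1 d2)).
  split; [apply Rmin_glb_lt; [exact Hrho|apply Rmin_glb_lt; apply cond_pos]|].
  intros x t [Hx Ht].
  assert (m1 := Rmin_l rho (Rmin d1 d2)); assert (m2 := Rmin_r rho (Rmin d1 d2)).
  assert (m3 := Rmin_l d1 d2); assert (m4 := Rmin_r d1 d2).
  assert (Wxt : W (u x t) (v x t)) by (split; [apply (Hd1 x t)|apply (Hd2 x t)]; lra).
  split; [exact Wxt|].
  destruct (Inv _ _ (HWV _ _ Wxt)) as [Ein [E1 [E2 _]]].
  destruct (Inj _ _ _ _ Ein (conj (Rlt_le_trans _ _ _ Hx m1) (Rlt_le_trans _ _ _ Ht m1)) E1 E2)
    as [Ix It].
  destruct (Ef _ _ Wxt) as [_ [Fuv Fvv]].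
  unfold hodo. rewrite Fuv, Fvv, Ix, It. split; ring.
Qed.

(** * The hodograph map, and part (2) *)

(* The implicit equations [hodo h f x t a b] say [(x, t) = (hodo_x h f a b, hodo_t h f a b)]. *)
Definition hodo_t (h f : R -> R -> R) (a b : R) : R := pv (pv f) a b / pv (pv h) a b.
Definition hodo_x (h f : R -> R -> R) (a b : R) : R :=
  pv (pu f) a b - hodo_t h f a b * pv (pu h) a b.

Section HodographMap.

Variables (S : R -> R -> Prop) (h f : R -> R -> R).
Hypotheses (S_open : open2 S) (h_smooth : smooth_on S h) (f_smooth : smooth_on S f).
Hypothesis hvv_neq0 : forall a b, S a b -> pv (pv h) a b <> 0.

Let X := hodo_x h f.
Let T := hodo_t h f.

Lemma hodo_iff (x t a b : R) : S a b -> (hodo h f x t a b <-> X a b = x /\ T a b = t).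
Proof.
  intros Hab. assert (Hv := hvv_neq0 a b Hab). unfold X, T, hodo_x, hodo_t, hodo.
  split; intros [E1 E2].
  - assert (Et : pv (pv f) a b / pv (pv h) a b = t) by (rewrite <- E2; field; exact Hv).
    rewrite Et. split; lra.
  - rewrite <- E2. split; [|field; exact Hv]. rewrite <- E1. ring.
Qed.

Lemma hodo_t_smooth : smooth_on S T.
Proof.
  apply (smooth_on_div S S_open); [exact hvv_neq0| |];
    apply smooth_on_pv, smooth_on_pv; assumption.
Qed.

Lemma hodo_x_smooth : smooth_on S X.
Proof.
  apply (smooth_on_minus S S_open); [apply smooth_on_pv, smooth_on_pu, f_smooth|].
  apply (smooth_on_mult S S_open); [apply hodo_t_smooth|apply smooth_on_pv, smooth_on_pu, h_smooth].
Qed.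

Lemma hodo_t_pu (a b : R) : S a b ->
  pu T a b = (pu (pv (pv f)) a b - T a b * pu (pv (pv h)) a b) / pv (pv h) a b.
Proof.
  intros Hab. assert (Hv := hvv_neq0 a b Hab). unfold T, hodo_t.
  assert (Pf := smooth_on_partials S _ (smooth_on_pv _ _ (smooth_on_pv _ _ f_smooth)) a b Hab).
  assert (Ph := smooth_on_partials S _ (smooth_on_pv _ _ (smooth_on_pv _ _ h_smooth)) a b Hab).
  rewrite pu_div by tauto. field. exact Hv.
Qed.

Lemma hodo_t_pv (a b : R) : S a b ->
  pv T a b = (pv (pv (pv f)) a b - T a b * pv (pv (pv h)) a b) / pv (pv h) a b.
Proof.
  intros Hab. assert (Hv := hvv_neq0 a b Hab). unfold T, hodo_t.
  assert (Pf := smooth_on_partials S _ (smooth_on_pv _ _ (smooth_on_pv _ _ f_smooth)) a b Hab).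
  assert (Ph := smooth_on_partials S _ (smooth_on_pv _ _ (smooth_on_pv _ _ h_smooth)) a b Hab).
  rewrite pv_div by tauto. field. exact Hv.
Qed.

Lemma hodo_x_pu (a b : R) : S a b ->
  pu X a b = pu (pu (pv f)) a b - (pu T a b * pv (pu h) a b + T a b * pu (pu (pv h)) a b).
Proof.
  intros Hab. unfold X, hodo_x. fold T.
  assert (Pt := smooth_on_partials S T hodo_t_smooth a b Hab).
  assert (Ph := smooth_on_partials S (pv (pu h)) (smooth_on_pv _ _ (smooth_on_pu _ _ h_smooth)) a b Hab).
  assert (Pf := smooth_on_partials S (pv (pu f)) (smooth_on_pv _ _ (smooth_on_pu _ _ f_smooth)) a b Hab).
  rewrite (pu_minus (pv (pu f)) (fun a b => T a b * pv (pu h) a b)); [|tauto|].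
  - rewrite pu_mult by tauto.
    rewrite (pu_pv_pu S f S_open f_smooth a b Hab), (pu_pv_pu S h S_open h_smooth a b Hab). reflexivity.
  - apply (ex_derive_mult (fun s => T s b) (fun s => pv (pu h) s b)); tauto.
Qed.

Lemma hodo_x_pv (a b : R) : S a b ->
  pv X a b = pu (pv (pv f)) a b - (pv T a b * pv (pu h) a b + T a b * pu (pv (pv h)) a b).
Proof.
  intros Hab. unfold X, hodo_x. fold T.
  assert (Pt := smooth_on_partials S T hodo_t_smooth a b Hab).
  assert (Ph := smooth_on_partials S (pv (pu h)) (smooth_on_pv _ _ (smooth_on_pu _ _ h_smooth)) a b Hab).
  assert (Pf := smooth_on_partials S (pv (pu f)) (smooth_on_pv _ _ (smooth_on_pu _ _ f_smooth)) a b Hab).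
  rewrite (pv_minus (pv (pu f)) (fun a b => T a b * pv (pu h) a b)); [|tauto|].
  - rewrite pv_mult by tauto.
    rewrite (pv_pv_pu S f S_open f_smooth a b Hab), (pv_pv_pu S h S_open h_smooth a b Hab). reflexivity.
  - apply (ex_derive_mult (fun s => T a s) (fun s => pv (pu h) a s)); tauto.
Qed.

Lemma hodo_jdet (a b : R) : S a b ->
  jdet X T a b * pv (pv h) a b =
    (T a b * pu (pu (pv h)) a b - pu (pu (pv f)) a b)
      * (T a b * pv (pv (pv h)) a b - pv (pv (pv f)) a b)
    - (T a b * pu (pv (pv h)) a b - pu (pv (pv f)) a b) ^ 2.
Proof.
  intros Hab. assert (Hv := hvv_neq0 a b Hab). unfold jdet.
  rewrite (hodo_x_pu a b Hab), (hodo_x_pv a b Hab), (hodo_t_pu a b Hab), (hodo_t_pv a b Hab).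
  field. exact Hv.
Qed.

Hypothesis pde : forall a b, S a b -> lin_pde h f a b.

(* [f_uu = h_uu T] by the linear PDE, whence [(f_uu)_v] below. *)
Lemma hodo_pde_pv (a b : R) : S a b ->
  pv (pu (pu f)) a b = pv (pu (pu h)) a b * T a b + pu (pu h) a b * pv T a b.
Proof.
  intros Hab.
  rewrite (pv_ext_on S S_open (pu (pu f)) (fun a b => pu (pu h) a b * T a b)); [| |exact Hab].
  - apply pv_mult.
    + exact (proj2 (smooth_on_partials S _ (smooth_on_pu _ _ (smooth_on_pu _ _ h_smooth)) a b Hab)).
    + exact (proj2 (smooth_on_partials S _ hodo_t_smooth a b Hab)).
  - intros x y Hxy. unfold T, hodo_t. assert (E := pde x y Hxy). unfold lin_pde in E.
    assert (Hv := hvv_neq0 x y Hxy).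
    apply Rmult_eq_reg_r with (pv (pv h) x y); [|exact Hv].
    replace (pu (pu h) x y * (pv (pv f) x y / pv (pv h) x y) * pv (pv h) x y)
      with (pu (pu h) x y * pv (pv f) x y) by (field; exact Hv).
    rewrite E. ring.
Qed.

Lemma hodo_x_pu_pde (a b : R) : S a b -> pu X a b = pu (pu h) a b * pv T a b - pv (pu h) a b * pu T a b.
Proof.
  intros Hab. rewrite (hodo_x_pu a b Hab).
  rewrite <- (pu_pv_pu S f S_open f_smooth a b Hab), <- (pu_pv_pu S h S_open h_smooth a b Hab).
  rewrite (pu_pv_pu_pu S f S_open f_smooth a b Hab), (pu_pv_pu_pu S h S_open h_smooth a b Hab).
  rewrite (hodo_pde_pv a b Hab). ring.
Qed.

Lemma hodo_x_pv_pde (a b : R) : S a b ->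
  - pv X a b = pv (pu h) a b * pv T a b - pv (pv h) a b * pu T a b.
Proof.
  intros Hab. assert (Hv := hvv_neq0 a b Hab).
  rewrite (hodo_x_pv a b Hab), (hodo_t_pu a b Hab). field. exact Hv.
Qed.

Lemma solves_S_of_hodo_inverse (N1 N2 : R -> R -> R) (x t : R) :
  S (N1 x t) (N2 x t) -> jdet X T (N1 x t) (N2 x t) <> 0 ->
  inverse_derivatives X T N1 N2 x t -> solves_S h N1 N2 x t.
Proof.
  intros Hab Hj [_ [_ [Dux [Dut [Dvx Dvt]]]]].
  set (a := N1 x t) in *. set (b := N2 x t) in *.
  unfold solves_S. fold a b.
  assert (ux : Derive (fun y => N1 y t) x = pv T a b / jdet X T a b) by (apply is_derive_unique; exact Dux).
  assert (ut : Derive (fun s => N1 x s) t = - pv X a b / jdet X T a b) by (apply is_derive_unique; exact Dut).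
  assert (vx : Derive (fun y => N2 y t) x = - pu T a b / jdet X T a b) by (apply is_derive_unique; exact Dvx).
  assert (vt : Derive (fun s => N2 x s) t = pu X a b / jdet X T a b) by (apply is_derive_unique; exact Dvt).
  rewrite ux, ut, vx, vt.
  split; [eexists; exact Dux|split; [eexists; exact Dut|]].
  split; [eexists; exact Dvx|split; [eexists; exact Dvt|]].
  split; unfold Rdiv.
  - rewrite (hodo_x_pv_pde a b Hab). ring.
  - rewrite (hodo_x_pu_pde a b Hab). ring.
Qed.

End HodographMap.

Lemma hodograph_solution (h f : R -> R -> R) (u0 v0 r x0 t0 : R) : 0 < r ->
  smooth_on (sq u0 v0 r) h -> (forall a b, sq u0 v0 r a b -> pv (pv h) a b <> 0) ->
  smooth_on (sq u0 v0 r) f -> (forall a b, sq u0 v0 r a b -> lin_pde h f a b) ->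
  hodo h f x0 t0 u0 v0 ->
  (t0 * pu (pu (pv h)) u0 v0 - pu (pu (pv f)) u0 v0)
    * (t0 * pv (pv (pv h)) u0 v0 - pv (pv (pv f)) u0 v0)
  - (t0 * pu (pv (pv h)) u0 v0 - pu (pv (pv f)) u0 v0) ^ 2 <> 0 ->
  exists (e d : R) (u v : R -> R -> R),
    0 < e /\ 0 < d /\ d <= r /\ u x0 t0 = u0 /\ v x0 t0 = v0 /\
    forall x t, sq x0 t0 e x t ->
      sq u0 v0 d (u x t) (v x t) /\ hodo h f x t (u x t) (v x t) /\
      (forall a b, sq u0 v0 d a b -> hodo h f x t a b -> a = u x t /\ b = v x t) /\
      solves_S h u v x t.
Proof.
  intros Hr Hs Hvv Hf Hpde Hhodo Hdet.
  set (S := sq u0 v0 r). assert (HS : open2 S) by apply open2_sq.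
  assert (Sp : S u0 v0) by (apply sq_center; exact Hr).
  destruct (proj1 (hodo_iff S h f Hvv x0 t0 u0 v0 Sp) Hhodo) as [Hx0 Ht0].
  assert (Hj : jdet (hodo_x h f) (hodo_t h f) u0 v0 <> 0).
  { intro Z. apply Hdet. rewrite <- Ht0, <- (hodo_jdet S h f HS Hs Hf Hvv u0 v0 Sp), Z. ring. }
  assert (Cn1 : forall g, smooth_on S g -> Cn 1 S g) by (intros g Hg; apply smooth_on_Cn, Hg).
  destruct (inverse_function_theorem _ _ u0 v0 r Hr
              (Cn1 _ (hodo_x_smooth S h f HS Hs Hf Hvv)) (Cn1 _ (hodo_t_smooth S h f HS Hs Hf Hvv)) Hj)
    as [rho [sig [N1 [N2 [Hrho [Hrr [Hsig [Inj [Jnz Inv]]]]]]]]].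
  rewrite Hx0, Ht0 in Inv.
  assert (HrS : forall a b, sq u0 v0 rho a b -> S a b) by (intros; eapply sq_le; eauto).
  assert (Hhodo_inv : forall x t a b, sq u0 v0 rho a b -> hodo h f x t a b ->
            hodo_x h f a b = x /\ hodo_t h f a b = t)
    by (intros x t a b Hab; apply (hodo_iff S h f Hvv), HrS, Hab).
  exists sig, rho, N1, N2.
  destruct (Inv x0 t0 (sq_center x0 t0 sig Hsig)) as [Nb [NE1 [NE2 _]]].
  destruct (Inj _ _ _ _ Nb (sq_center u0 v0 rho Hrho)) as [Eu Ev]; [congruence|congruence|].
  do 5 (split; [assumption|]).
  intros x t Hxt.
  destruct (Inv x t Hxt) as [Nin [E1 [E2 Nder]]].
  split; [exact Nin|split; [|split]].
  - apply (hodo_iff S h f Hvv); [apply HrS, Nin|split; assumption].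
  - intros a' b' Hab' Ho. destruct (Hhodo_inv x t a' b' Hab' Ho) as [Q1 Q2].
    apply Inj; [exact Hab'|exact Nin|congruence|congruence].
  - apply (solves_S_of_hodo_inverse S h f HS Hs Hf Hvv Hpde); [apply HrS, Nin|apply Jnz, Nin|exact Nder].
Qed.

Theorem mainTheorem1 :
  forall (D : R -> R -> Prop) (h : R -> R -> R),
    open2 D -> smooth_on D h ->
    (forall a b, D a b -> pu (pu h) a b * pv (pv h) a b <> 0) ->
  (* Part (1) *)
  (forall (u v : R -> R -> R) (x0 t0 r : R),
     0 < r ->
     smooth_on (sq x0 t0 r) u -> smooth_on (sq x0 t0 r) v ->
     (forall x t, sq x0 t0 r x t ->
        D (u x t) (v x t) /\ solves_S h u v x t /\ nondeg h u v x t) ->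
     exists (f : R -> R -> R) (rf : R),
       0 < rf /\
       (forall a b, sq (u x0 t0) (v x0 t0) rf a b -> D a b) /\
       smooth_on (sq (u x0 t0) (v x0 t0) rf) f /\
       (forall a b, sq (u x0 t0) (v x0 t0) rf a b -> lin_pde h f a b) /\
       exists e, 0 < e /\
         forall x t, sq x0 t0 e x t ->
           sq (u x0 t0) (v x0 t0) rf (u x t) (v x t) /\
           hodo h f x t (u x t) (v x t))
  /\
  (* Part (2) *)
  (forall (f : R -> R -> R) (u0 v0 r x0 t0 : R),
     0 < r ->
     (forall a b, sq u0 v0 r a b -> D a b) ->
     smooth_on (sq u0 v0 r) f ->
     (forall a b, sq u0 v0 r a b -> lin_pde h f a b) ->
     hodo h f x0 t0 u0 v0 ->
     (t0 * pu (pu (pv h)) u0 v0 - pu (pu (pv f)) u0 v0)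
       * (t0 * pv (pv (pv h)) u0 v0 - pv (pv (pv f)) u0 v0)
     - (t0 * pu (pv (pv h)) u0 v0 - pu (pv (pv f)) u0 v0) ^ 2 <> 0 ->
     exists (e d : R) (u v : R -> R -> R),
       0 < e /\ 0 < d /\ d <= r /\
       u x0 t0 = u0 /\ v x0 t0 = v0 /\
       forall x t, sq x0 t0 e x t ->
         sq u0 v0 d (u x t) (v x t) /\
         hodo h f x t (u x t) (v x t) /\
         (forall a b, sq u0 v0 d a b -> hodo h f x t a b ->
            a = u x t /\ b = v x t) /\
         solves_S h u v x t).
Proof.
  intros D h HD Hh Hnz. split.
  - exact (hodograph_potential D h HD Hh).
  - intros f u0 v0 r x0 t0 Hr HSD Hf Hpde Hhodo Hdet.
    apply (hodograph_solution h f u0 v0 r x0 t0 Hr); try assumption.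
    + exact (smooth_on_sub D _ h HSD Hh).
    + intros a b Hab Z. apply (Hnz a b (HSD a b Hab)). rewrite Z; ring.
Qed.
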